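(* Let $(u,m)$ be a pair of smooth (classical) solutions to the system \[ \begin{cases} u_t + \frac{\sigma^2}{2} u_{xx} - ru + G(u_x,m)^2 = 0, & 0<t<T,\ 0<x<L,\\ m_t - \frac{\sigma^2}{2} m_{xx} - \{G(u_x,m)m\}_x = 0, & 0<t<T,\ 0<x<L,\\ m(0,x)=m_0(x),\quad u(T,x)=u_T(x), & 0\le x\le L,\\ u_x(t,0)=u_x(t,L)=0, & 0\le t\le T,\\ \frac{\sigma^2}{2} m_x(t,x) + G(u_x,m)m(t,x) = 0, & 0\le t\le T,\ x\in\{0,L\}, \end{cases} \] where $G(u_x,m)(t,x) := \frac12\left(b + c\int_0^L u_x(t,y)m(t,y)\,dy - u_x(t,x)\right)$. Then \[ \|u\|_\infty + \|u_x\|_\infty \le C, \] where the constant $C>0$ does not depend on $\sigma$. In particular, for all $t\in[0,T]$, \[ \left|\int_0^L u_x(t,x)m(t,x)\,dx\right| \le C, \] with $C>0$ independent of $\sigma$.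
   Context: Standing setting: $L,T,\sigma,r>0$ are constants, $\epsilon>0$, and $b=\frac{2}{2+\epsilon}$, $c=\frac{\epsilon}{2+\epsilon}$. The data satisfy: $u_T,m_0\in C^{2+\gamma}([0,L])$ for some $\gamma>0$; $u_T'(0)=u_T'(L)=0$ and $m_0(0)=m_0'(0)=m_0(L)=m_0'(L)=0$; $m_0$ is a probability density on $[0,L]$; $u_T\ge 0$. Constants may depend on $u_T,m_0,L,T,r,\epsilon$ but (as stated) not on $\sigma$. $\|\cdot\|_\infty$ is the sup norm on $[0,T]\times[0,L]$. *)

From Stdlib Require Import Reals Lra.
From Coquelicot Require Import Coquelicot.
Open Scope R_scope.

Definition bcoef (eps : R) : R := 2 / (2 + eps).
Definition ccoef (eps : R) : R := eps / (2 + eps).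

Definition cont_on_seg (L : R) (f : R -> R) : Prop :=
  forall x, 0 <= x <= L -> forall e, 0 < e -> exists d, 0 < d /\
    forall y, 0 <= y <= L -> Rabs (y - x) < d -> Rabs (f y - f x) < e.

(* f is in C^{2+gamma}([0,L]), with f1 = f' and f2 = f'' (derivatives taken in
   the interior, extended continuously to the closed interval), f2 gamma-Hölder. *)
Definition C2gamma (L gamma : R) (f f1 f2 : R -> R) : Prop :=
  (forall x, 0 < x < L -> is_derive f x (f1 x)) /\
  (forall x, 0 < x < L -> is_derive f1 x (f2 x)) /\
  cont_on_seg L f /\ cont_on_seg L f1 /\ cont_on_seg L f2 /\
  exists K, forall x y, 0 <= x <= L -> 0 <= y <= L -> x < y ->
    Rabs (f2 y - f2 x) <= K * Rpower (y - x) gamma.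

Definition cont_on_rect (T L : R) (f : R -> R -> R) : Prop :=
  forall t x, 0 <= t <= T -> 0 <= x <= L -> forall e, 0 < e -> exists d, 0 < d /\
    forall s y, 0 <= s <= T -> 0 <= y <= L -> Rabs (s - t) < d -> Rabs (y - x) < d ->
      Rabs (f s y - f t x) < e.

(* Classical C^{1,2} regularity on [0,T]x[0,L]: w has partial derivatives
   w_t = wt, w_x = wx, w_xx = wxx in the open rectangle, and w, wt, wx, wxx
   are continuous up to the boundary (so wt, wx, wxx are the continuous
   extensions of the derivatives to the closed rectangle). *)
Definition C12 (T L : R) (w wt wx wxx : R -> R -> R) : Prop :=
  (forall t x, 0 < t < T -> 0 < x < L ->
     is_derive (fun s => w s x) t (wt t x) /\
     is_derive (fun y => w t y) x (wx t x) /\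
     is_derive (fun y => wx t y) x (wxx t x)) /\
  cont_on_rect T L w /\ cont_on_rect T L wt /\
  cont_on_rect T L wx /\ cont_on_rect T L wxx.

Definition Gfun (eps L : R) (ux m : R -> R -> R) (t x : R) : R :=
  / 2 * (bcoef eps + ccoef eps * RInt (fun y => ux t y * m t y) 0 L - ux t x).

From Stdlib Require Import Reals Lra Classical ClassicalEpsilon.
From Coquelicot Require Import Coquelicot.
Open Scope R_scope.

(** Since [Gfun eps L ux m t x] depends on [x] only through [ux t x], the HJB equation reads
    [u_t + sigma^2/2 u_xx - r u + H(t, u_x) = 0].  Doubling the variables, at a positive
    maximum of [u(t,y) - u(t,x) - M (y - x)] over [x <= y] the two gradients agree, so the
    equations at [x] and [y] can be subtracted and the maximum principle applies; the Neumann
    condition rules out maxima on the boundary and [M > sup |u_T'|] rules out [t = T].  With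
    the reflection [x |-> L - x] this gives [|u_x| <= sup |u_T'| + 1] for every [sigma].
    The density [m] keeps mass [1] by the zero-flux condition and stays nonnegative because
    [int (m^-)^3] obeys a Gronwall inequality, so [|int u_x m| <= sup |u_x|] and the drift is
    bounded.  Finally the spatial mean of [u] solves a linear ODE with a bounded source, and
    [|u_x|] bounds the oscillation of [u] around its mean. *)

(** * Continuity, derivatives and integrals on a segment *)

(* Composing with [clamp a b] turns continuity relative to [[a,b]] into continuity on [R],
   where the library theorems apply. *)
Definition clamp (a b x : R) : R := Rmax a (Rmin b x).

Lemma clamp_in a b x : a <= b -> a <= clamp a b x <= b.
Proof. intros; unfold clamp, Rmax, Rmin; repeat destruct Rle_dec; lra. Qed.

Lemma clamp_id a b x : a <= x <= b -> clamp a b x = x.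
Proof. intros; unfold clamp, Rmax, Rmin; repeat destruct Rle_dec; lra. Qed.

Lemma clamp_lipschitz a b x y : a <= b -> Rabs (clamp a b y - clamp a b x) <= Rabs (y - x).
Proof.
  intros; unfold clamp, Rmax, Rmin; repeat destruct Rle_dec;
  unfold Rabs; repeat destruct Rcase_abs; lra.
Qed.

Lemma locally_of_radius (x : R) (P : R -> Prop) :
  (exists d, 0 < d /\ forall y, Rabs (y - x) < d -> P y) -> locally x P.
Proof. intros [d [Hd H]]. exists (mkposreal d Hd). intros y Hy. apply H. exact Hy. Qed.

Lemma locally_interior a b x (P : R -> Prop) :
  a < x < b -> (forall y, a < y < b -> P y) -> locally x P.
Proof.
  intros Hx HP. apply locally_of_radius. exists (Rmin (x - a) (b - x)). split.
  - apply Rmin_case; lra.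
  - intros y Hy. apply HP. revert Hy. unfold Rmin; destruct Rle_dec;
    unfold Rabs; destruct Rcase_abs; intros; lra.
Qed.

(* [cont_on_seg L] unfolds to [seg_cont 0 L]. *)
Definition seg_cont (a b : R) (f : R -> R) : Prop :=
  forall x, a <= x <= b -> forall e, 0 < e -> exists d, 0 < d /\
    forall y, a <= y <= b -> Rabs (y - x) < d -> Rabs (f y - f x) < e.

Lemma seg_cont_clamp a b f :
  a <= b -> seg_cont a b f -> forall z, continuity_pt (fun x => f (clamp a b x)) z.
Proof.
  intros Hab Hf z e He.
  destruct (Hf (clamp a b z) (clamp_in a b z Hab) e He) as [d [Hd H]].
  exists d; split; [lra|]. intros y [_ Hy]. simpl in *. unfold R_dist in *.
  apply H. apply clamp_in; auto. eapply Rle_lt_trans. apply clamp_lipschitz; auto. auto.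
Qed.

Lemma seg_cont_clamp_continuous a b f :
  a <= b -> seg_cont a b f -> forall z, continuous (fun x => f (clamp a b x)) z.
Proof. intros. apply continuity_pt_filterlim. apply seg_cont_clamp; auto. Qed.

Lemma seg_cont_of_continuity_pt a b f F : (forall x, a <= x <= b -> f x = F x) ->
  (forall x, a <= x <= b -> continuity_pt F x) -> seg_cont a b f.
Proof.
  intros Heq Hc x Hx e He. destruct (Hc x Hx e He) as [d [Hd H]].
  exists d; split; [lra|]. intros y Hy Hyx. rewrite !Heq by auto.
  destruct (Req_dec y x) as [->|Hne]. { rewrite Rminus_diag, Rabs_R0; auto. }
  apply (H y); repeat split; try exact I; auto.
Qed.

Lemma seg_cont_plus a b f g :
  a <= b -> seg_cont a b f -> seg_cont a b g -> seg_cont a b (fun x => f x + g x).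
Proof.
  intros Hab Hf Hg.
  apply seg_cont_of_continuity_pt with (fun x => f (clamp a b x) + g (clamp a b x)).
  - intros; rewrite !clamp_id; auto.
  - intros; apply continuity_pt_plus; apply seg_cont_clamp; auto.
Qed.

Lemma seg_cont_minus a b f g :
  a <= b -> seg_cont a b f -> seg_cont a b g -> seg_cont a b (fun x => f x - g x).
Proof.
  intros Hab Hf Hg.
  apply seg_cont_of_continuity_pt with (fun x => f (clamp a b x) - g (clamp a b x)).
  - intros; rewrite !clamp_id; auto.
  - intros; apply continuity_pt_minus; apply seg_cont_clamp; auto.
Qed.

Lemma seg_cont_mult a b f g :
  a <= b -> seg_cont a b f -> seg_cont a b g -> seg_cont a b (fun x => f x * g x).
Proof.
  intros Hab Hf Hg.
  apply seg_cont_of_continuity_pt with (fun x => f (clamp a b x) * g (clamp a b x)).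
  - intros; rewrite !clamp_id; auto.
  - intros; apply continuity_pt_mult; apply seg_cont_clamp; auto.
Qed.

Lemma seg_cont_const a b c : seg_cont a b (fun _ => c).
Proof. intros x Hx e He. exists 1; split; [lra|]. intros. rewrite Rminus_diag, Rabs_R0; auto. Qed.

Lemma seg_cont_id a b : seg_cont a b (fun x => x).
Proof. intros x Hx e He. exists e; split; auto. Qed.

Lemma seg_cont_comp a b f g :
  a <= b -> seg_cont a b f -> (forall y, continuity_pt g y) -> seg_cont a b (fun x => g (f x)).
Proof.
  intros Hab Hf Hg. apply seg_cont_of_continuity_pt with (fun x => g (f (clamp a b x))).
  - intros; rewrite !clamp_id; auto.
  - intros. apply (continuity_pt_comp (fun x => f (clamp a b x)) g); auto.
    apply seg_cont_clamp; auto.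
Qed.

Lemma seg_cont_subseg a b a' b' f : seg_cont a b f -> a <= a' -> b' <= b -> seg_cont a' b' f.
Proof.
  intros Hf H1 H2 x Hx e He. destruct (Hf x ltac:(lra) e He) as [d [Hd H]].
  exists d; split; auto. intros. apply H; auto; lra.
Qed.

Lemma seg_cont_ex_RInt a b f : a <= b -> seg_cont a b f -> ex_RInt f a b.
Proof.
  intros Hab Hf. apply ex_RInt_ext with (fun x => f (clamp a b x)).
  - intros x Hx. rewrite Rmin_left in Hx by lra. rewrite Rmax_right in Hx by lra.
    rewrite clamp_id; lra.
  - apply (ex_RInt_continuous (V:=R_CompleteNormedModule)).
    intros; apply seg_cont_clamp_continuous; auto.
Qed.

Lemma seg_cont_max a b f : a <= b -> seg_cont a b f ->
  exists x0, a <= x0 <= b /\ forall x, a <= x <= b -> f x <= f x0.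
Proof.
  intros Hab Hf. destruct (continuity_ab_maj (fun x => f (clamp a b x)) a b Hab) as [x0 [H1 H2]].
  { intros; apply seg_cont_clamp; auto. }
  exists x0; split; auto. intros x Hx. specialize (H1 x Hx). rewrite !clamp_id in H1; auto.
Qed.

Lemma is_derive_continuity_pt f x l : is_derive f x l -> continuity_pt f x.
Proof.
  intros H. apply continuity_pt_filterlim. apply (ex_derive_continuous (V:=R_NormedModule)).
  exists l; auto.
Qed.

Lemma seg_cont_exp_lin a b k : seg_cont a b (fun s => exp (k * s)).
Proof.
  apply seg_cont_of_continuity_pt with (fun s => exp (k * s)); auto. intros x _.
  apply is_derive_continuity_pt with (k * exp (k * x)). auto_derive; auto; ring.
Qed.

Lemma mvt_interior f df a b : a < b ->
  (forall x, a <= x <= b -> continuity_pt f x) ->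
  (forall x, a < x < b -> is_derive f x (df x)) ->
  exists c, a < c < b /\ f b - f a = df c * (b - a).
Proof.
  intros Hab Hc Hd.
  assert (pr1 : forall c, a < c < b -> derivable_pt f c).
  { intros c Hc'. exists (df c). apply is_derive_Reals. auto. }
  assert (pr2 : forall c, a < c < b -> derivable_pt id c) by (intros; apply derivable_pt_id).
  destruct (MVT f id a b pr1 pr2 Hab Hc) as [c [P HP]].
  { intros; apply derivable_continuous_pt, derivable_pt_id. }
  exists c; split; auto.
  rewrite (derive_pt_eq_0 f c (df c) (pr1 c P)) in HP by (apply is_derive_Reals; auto).
  rewrite (derive_pt_eq_0 id c 1 (pr2 c P)) in HP by apply derivable_pt_lim_id.
  unfold id in HP. lra.
Qed.

Lemma mvt_seg f df a b : a < b -> seg_cont a b f ->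
  (forall x, a < x < b -> is_derive f x (df x)) ->
  exists c, a < c < b /\ f b - f a = df c * (b - a).
Proof.
  intros Hab Hf Hd.
  destruct (mvt_interior (fun x => f (clamp a b x)) df a b Hab) as [c [Hc H]].
  - intros; apply seg_cont_clamp; auto; lra.
  - intros x Hx. apply is_derive_ext_loc with f; auto.
    apply (locally_interior a b); auto. intros y Hy. rewrite clamp_id; lra.
  - exists c; split; auto. rewrite !clamp_id in H; lra.
Qed.

(* Coquelicot states its rules with the module operations [plus], [minus] and [scal]; the
   versions below (and the [RInt] ones further down) use [Rplus], [Rminus] and [Rmult], so they
   match goals on [R] as written. *)
Lemma is_derive_constR (c x : R) : @is_derive R_AbsRing R_NormedModule (fun _ : R => c) x 0.
Proof. apply (is_derive_const (V:=R_NormedModule) c x). Qed.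

Lemma is_derive_idR (x : R) : is_derive (fun y : R => y) x 1.
Proof. apply (is_derive_id x). Qed.

Lemma is_derive_plusR f g x df dg :
  is_derive f x df -> is_derive g x dg -> is_derive (fun y => f y + g y) x (df + dg).
Proof. intros. exact (is_derive_plus f g x df dg H H0). Qed.

Lemma is_derive_minusR f g x df dg :
  is_derive f x df -> is_derive g x dg -> is_derive (fun y => f y - g y) x (df - dg).
Proof. intros. exact (is_derive_minus f g x df dg H H0). Qed.

Lemma is_derive_scalR f x k df : is_derive f x df -> is_derive (fun y => k * f y) x (k * df).
Proof. intros. exact (is_derive_scal f x k df H). Qed.

Lemma is_derive_multR f g x df dg : is_derive f x df -> is_derive g x dg ->
  is_derive (fun y => f y * g y) x (df * g x + f x * dg).
Proof. intros. apply (is_derive_mult f g x df dg H H0). intros; apply Rmult_comm. Qed.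

Lemma is_derive_compR (g f : R -> R) x dg df : is_derive g (f x) dg -> is_derive f x df ->
  is_derive (fun y => g (f y)) x (dg * df).
Proof. intros H1 H2. rewrite Rmult_comm. apply (is_derive_comp g f x dg df); auto. Qed.

Lemma is_derive_shift (f : R -> R) (a s l : R) :
  is_derive f (a + s) l -> is_derive (fun z => f (a + z)) s l.
Proof.
  intros H.
  assert (H' := is_derive_compR f (fun z => a + z) s l (0 + 1) H
    (is_derive_plusR _ _ s _ _ (is_derive_constR a s) (is_derive_idR s))).
  replace (l * (0 + 1)) with l in H' by ring. exact H'.
Qed.

Lemma is_derive_reflect (f : R -> R) (L x l : R) :
  is_derive f (L - x) l -> is_derive (fun z => f (L - z)) x (- l).
Proof.
  intros H.
  assert (H' := is_derive_compR f (fun z => L - z) x l (0 - 1) H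
    (is_derive_minusR _ _ x _ _ (is_derive_constR L x) (is_derive_idR x))).
  replace (l * (0 - 1)) with (- l) in H' by ring. exact H'.
Qed.

Lemma derive_le0_of_right_max f x l d : is_derive f x l -> 0 < d ->
  (forall h, 0 <= h < d -> f (x + h) <= f x) -> l <= 0.
Proof.
  intros Hd Hd0 H. apply is_derive_Reals in Hd.
  apply Rnot_lt_le; intro Hl.
  destruct (Hd l Hl) as [del Hdel].
  set (h := Rmin del d / 2).
  assert (Hh : 0 < h) by (unfold h; apply Rmin_case; destruct del; simpl; lra).
  assert (Hh2 : h < del) by (unfold h; generalize (Rmin_l del d); destruct del; simpl in *; lra).
  assert (Hh3 : h < d) by (unfold h; generalize (Rmin_r del d); lra).
  specialize (Hdel h ltac:(lra) ltac:(rewrite Rabs_right; lra)).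
  specialize (H h ltac:(lra)).
  assert ((f (x + h) - f x) / h <= 0).
  { unfold Rdiv. apply Rmult_le_0_r; [lra|]. left; apply Rinv_0_lt_compat; lra. }
  revert Hdel. unfold Rabs; destruct Rcase_abs; lra.
Qed.

Lemma derive_ge0_of_left_max (f : R -> R) (x l d : R) : is_derive f x l -> 0 < d ->
  (forall h, 0 <= h < d -> f (x - h) <= f x) -> 0 <= l.
Proof.
  intros Hd Hd0 H.
  assert (Hd' : is_derive (fun y => f (0 - y)) (- x) (- l)).
  { apply is_derive_reflect. rewrite Rminus_0_l, Ropp_involutive. exact Hd. }
  enough (- l <= 0) by lra.
  apply (derive_le0_of_right_max _ _ _ d Hd' Hd0). intros h Hh.
  replace (0 - (- x + h)) with (x - h) by ring. rewrite Rminus_0_l, Ropp_involutive. auto.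
Qed.

Lemma derive_eq0_of_local_max f x l d : is_derive f x l -> 0 < d ->
  (forall y, Rabs (y - x) < d -> f y <= f x) -> l = 0.
Proof.
  intros Hd Hd0 H.
  assert (l <= 0).
  { apply (derive_le0_of_right_max f x l d Hd Hd0). intros h Hh. apply H.
    replace (x + h - x) with h by ring. rewrite Rabs_right; lra. }
  assert (0 <= l).
  { apply (derive_ge0_of_left_max f x l d Hd Hd0). intros h Hh. apply H.
    replace (x - h - x) with (- h) by ring. rewrite Rabs_Ropp, Rabs_right; lra. }
  lra.
Qed.

Lemma derive2_le0_of_local_max g g' x d l2 : 0 < d ->
  (forall y, Rabs (y - x) < d -> is_derive g y (g' y)) ->
  is_derive g' x l2 ->
  (forall y, Rabs (y - x) < d -> g y <= g x) -> l2 <= 0.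
Proof.
  intros Hd0 Hg Hg' Hmax.
  assert (H0 : g' x = 0).
  { apply (derive_eq0_of_local_max g x (g' x) d); auto.
    apply Hg. rewrite Rminus_diag, Rabs_R0; auto. }
  apply Rnot_lt_le; intro Hl.
  apply is_derive_Reals in Hg'. destruct (Hg' l2 Hl) as [del Hdel].
  set (s := Rmin del d / 2).
  assert (Hs : 0 < s) by (unfold s; apply Rmin_case; destruct del; simpl; lra).
  assert (Hs2 : s < del) by (unfold s; generalize (Rmin_l del d); destruct del; simpl in *; lra).
  assert (Hs3 : s < d) by (unfold s; generalize (Rmin_r del d); lra).
  (* [g'] leaves [0] with positive slope, so [g] increases on [[x, x + s]] *)
  destruct (mvt_interior g g' x (x + s)) as [c [Hc Heq]]; [lra| | |].
  { intros y Hy. apply is_derive_continuity_pt with (g' y). apply Hg.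
    unfold Rabs; destruct Rcase_abs; lra. }
  { intros y Hy. apply Hg. unfold Rabs; destruct Rcase_abs; lra. }
  specialize (Hdel (c - x) ltac:(lra) ltac:(rewrite Rabs_right; lra)).
  replace (x + (c - x)) with c in Hdel by ring. rewrite H0, Rminus_0_r in Hdel.
  assert (Hpos : 0 < g' c / (c - x)) by (revert Hdel; unfold Rabs; destruct Rcase_abs; lra).
  assert (0 < g' c).
  { replace (g' c) with (g' c / (c - x) * (c - x)) by (field; lra).
    apply Rmult_lt_0_compat; lra. }
  specialize (Hmax (x + s) ltac:(replace (x + s - x) with s by ring; rewrite Rabs_right; lra)).
  assert (0 < g' c * (x + s - x)) by (apply Rmult_lt_0_compat; lra).
  lra.
Qed.

Lemma derive_le0_of_max_at_left_end a b f f' : a < b -> seg_cont a b f -> seg_cont a b f' ->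
  (forall x, a < x < b -> is_derive f x (f' x)) ->
  (forall x, a <= x <= b -> f x <= f a) -> f' a <= 0.
Proof.
  intros Hab Hf Hf' Hd Hmax. apply Rnot_lt_le; intro Hpos.
  destruct (Hf' a ltac:(lra) (f' a) Hpos) as [d [Hd0 Hnear]].
  set (h := Rmin d (b - a) / 2).
  assert (Hh : 0 < h /\ h < d /\ h < b - a).
  { unfold h; generalize (Rmin_l d (b - a)) (Rmin_r d (b - a)).
    split; [apply Rmin_case|]; lra. }
  destruct (mvt_seg f f' a (a + h)) as [c [Hc Heq]]; [lra| |intros; apply Hd; lra|].
  { apply seg_cont_subseg with a b; auto; lra. }
  specialize (Hnear c ltac:(lra) ltac:(rewrite Rabs_right; lra)).
  assert (0 < f' c) by (revert Hnear; unfold Rabs; destruct Rcase_abs; lra).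
  specialize (Hmax (a + h) ltac:(lra)). nra.
Qed.

Lemma derive_ge0_of_max_at_right_end a b f f' : a < b -> seg_cont a b f -> seg_cont a b f' ->
  (forall x, a < x < b -> is_derive f x (f' x)) ->
  (forall x, a <= x <= b -> f x <= f b) -> 0 <= f' b.
Proof.
  intros Hab Hf Hf' Hd Hmax. apply Rnot_lt_le; intro Hneg.
  destruct (Hf' b ltac:(lra) (- f' b) ltac:(lra)) as [d [Hd0 Hnear]].
  set (h := Rmin d (b - a) / 2).
  assert (Hh : 0 < h /\ h < d /\ h < b - a).
  { unfold h; generalize (Rmin_l d (b - a)) (Rmin_r d (b - a)).
    split; [apply Rmin_case|]; lra. }
  destruct (mvt_seg f f' (b - h) b) as [c [Hc Heq]]; [lra| |intros; apply Hd; lra|].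
  { apply seg_cont_subseg with a b; auto; lra. }
  specialize (Hnear c ltac:(lra) ltac:(rewrite Rabs_left; lra)).
  assert (f' c < 0) by (revert Hnear; unfold Rabs; destruct Rcase_abs; lra).
  specialize (Hmax (b - h) ltac:(lra)). nra.
Qed.

Lemma Rabs_derive_le_of_lipschitz (f : R -> R) x l d M : is_derive f x l -> 0 < d ->
  (forall y, Rabs (y - x) < d -> Rabs (f y - f x) <= M * Rabs (y - x)) -> Rabs l <= M.
Proof.
  intros Hd Hd0 H. apply Rnot_lt_le; intro Hlt. apply is_derive_Reals in Hd.
  destruct (Hd (Rabs l - M) ltac:(lra)) as [del Hdel].
  set (h := Rmin del d / 2).
  assert (Hh : 0 < h) by (unfold h; apply Rmin_case; destruct del; simpl; lra).
  assert (Hh2 : h < del) by (unfold h; generalize (Rmin_l del d); destruct del; simpl in *; lra).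
  assert (Hh3 : h < d) by (unfold h; generalize (Rmin_r del d); lra).
  specialize (Hdel h ltac:(lra) ltac:(rewrite Rabs_right; lra)).
  specialize (H (x + h) ltac:(replace (x + h - x) with h by ring; rewrite Rabs_right; lra)).
  replace (x + h - x) with h in H by ring. rewrite (Rabs_right h) in H by lra.
  assert (Rabs ((f (x + h) - f x) / h) <= M).
  { unfold Rdiv. rewrite Rabs_mult, Rabs_inv, (Rabs_right h) by lra.
    apply Rmult_le_reg_r with h; auto. field_simplify; lra. }
  assert (Rabs l <= Rabs ((f (x + h) - f x) / h) + Rabs ((f (x + h) - f x) / h - l)).
  { replace l with ((f (x + h) - f x) / h - ((f (x + h) - f x) / h - l)) at 1 by ring.
    eapply Rle_trans. apply Rabs_triang. rewrite Rabs_Ropp. lra. }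
  lra.
Qed.

Lemma Rabs_increment_sub_derive_le (g dg : R -> R) t h e :
  (forall s, Rmin t (t + h) <= s <= Rmax t (t + h) -> is_derive g s (dg s)) ->
  (forall s, Rmin t (t + h) <= s <= Rmax t (t + h) -> Rabs (dg s - dg t) <= e) ->
  Rabs (g (t + h) - g t - h * dg t) <= Rabs h * e.
Proof.
  intros Hd Hb.
  destruct (MVT_gen g t (t + h) dg) as [xi [Hxi Hmvt]].
  - intros s Hs. apply Hd. lra.
  - intros s Hs. apply is_derive_continuity_pt with (dg s), Hd, Hs.
  - simpl in Hmvt. rewrite Hmvt.
    replace (dg xi * (t + h - t) - h * dg t) with (h * (dg xi - dg t)) by ring.
    rewrite Rabs_mult. apply Rmult_le_compat_l; [apply Rabs_pos|apply Hb, Hxi].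
Qed.

Lemma mvt_exp_weighted k a b F dF : a < b -> seg_cont a b F ->
  (forall s, a < s < b -> is_derive F s (dF s)) ->
  exists c, a < c < b /\
    exp (- k * b) * F b - exp (- k * a) * F a = exp (- k * c) * (dF c - k * F c) * (b - a).
Proof.
  intros Hab HF Hd.
  apply (mvt_seg (fun s => exp (- k * s) * F s)); auto.
  - apply seg_cont_mult; [lra|apply seg_cont_exp_lin|auto].
  - intros s Hs.
    replace (exp (- k * s) * (dF s - k * F s))
      with (- k * exp (- k * s) * F s + exp (- k * s) * dF s) by ring.
    apply (is_derive_multR (fun s => exp (- k * s)) F); [auto_derive; auto; ring|auto].
Qed.

Lemma RInt_plusR f g a b : ex_RInt f a b -> ex_RInt g a b ->
  RInt (fun x => f x + g x) a b = RInt f a b + RInt g a b.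
Proof. intros. exact (RInt_plus f g a b H H0). Qed.

Lemma RInt_minusR f g a b : ex_RInt f a b -> ex_RInt g a b ->
  RInt (fun x => f x - g x) a b = RInt f a b - RInt g a b.
Proof. intros. exact (RInt_minus f g a b H H0). Qed.

Lemma RInt_scalR f a b k : ex_RInt f a b -> RInt (fun x => k * f x) a b = k * RInt f a b.
Proof. intros. exact (RInt_scal f a b k H). Qed.

Lemma RInt_constR a b c : RInt (fun _ => c) a b = (b - a) * c.
Proof. rewrite RInt_const. reflexivity. Qed.

Lemma ex_RInt_plusR f g a b : ex_RInt f a b -> ex_RInt g a b -> ex_RInt (fun x => f x + g x) a b.
Proof. intros. exact (ex_RInt_plus f g a b H H0). Qed.

Lemma ex_RInt_minusR f g a b : ex_RInt f a b -> ex_RInt g a b -> ex_RInt (fun x => f x - g x) a b.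
Proof. intros. exact (ex_RInt_minus f g a b H H0). Qed.

Lemma ex_RInt_scalR f a b k : ex_RInt f a b -> ex_RInt (fun x => k * f x) a b.
Proof. intros. exact (ex_RInt_scal f a b k H). Qed.

Lemma RInt_le_const f a b c : a <= b -> ex_RInt f a b -> (forall x, a < x < b -> f x <= c) ->
  RInt f a b <= (b - a) * c.
Proof. intros. rewrite <- RInt_constR. apply RInt_le; auto. apply ex_RInt_const. Qed.

Lemma RInt_ge_const f a b c : a <= b -> ex_RInt f a b -> (forall x, a < x < b -> c <= f x) ->
  (b - a) * c <= RInt f a b.
Proof. intros. rewrite <- RInt_constR. apply RInt_le; auto. apply ex_RInt_const. Qed.

Lemma Rabs_RInt_le_const f a b c : a <= b -> ex_RInt f a b ->
  (forall x, a < x < b -> Rabs (f x) <= c) -> Rabs (RInt f a b) <= (b - a) * c.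
Proof.
  intros Hab He H. apply Rabs_le_between. split.
  - rewrite Ropp_mult_distr_r. apply RInt_ge_const; auto.
    intros x Hx. apply (proj1 (Rabs_le_between _ _) (H x Hx)).
  - apply RInt_le_const; auto. intros x Hx. apply (proj1 (Rabs_le_between _ _) (H x Hx)).
Qed.

Lemma RInt_seg_derive a b F f : a < b -> seg_cont a b F -> seg_cont a b f ->
  (forall x, a < x < b -> is_derive F x (f x)) -> RInt f a b = F b - F a.
Proof.
  intros Hab HF Hf Hd.
  set (fc := fun x => f (clamp a b x)).
  assert (Hfc : forall z, continuous fc z) by (intros; apply seg_cont_clamp_continuous; auto; lra).
  assert (Hex : forall u v, ex_RInt fc u v)
    by (intros; apply (ex_RInt_continuous (V:=R_CompleteNormedModule)); auto).
  set (G := fun x => RInt fc a x).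
  assert (HG : forall x, is_derive G x (fc x)).
  { intros x. apply (is_derive_RInt (V:=R_CompleteNormedModule) fc G a x); [|apply Hfc].
    apply locally_of_radius. exists 1; split; [lra|]. intros y _.
    apply (RInt_correct (V:=R_CompleteNormedModule)), Hex. }
  destruct (mvt_interior (fun x => F (clamp a b x) - G x) (fun _ => 0) a b Hab) as [c [Hc Heq]].
  { intros x Hx. apply continuity_pt_minus; [apply seg_cont_clamp; auto; lra|].
    apply is_derive_continuity_pt with (fc x). auto. }
  { intros x Hx. replace 0 with (f x - fc x) by (unfold fc; rewrite clamp_id; lra).
    apply (is_derive_minus (fun x => F (clamp a b x)) G); [|apply HG].
    apply is_derive_ext_loc with F; auto.
    apply (locally_interior a b); auto. intros y Hy. rewrite clamp_id; lra. }
  rewrite !clamp_id in Heq by lra.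
  assert (G a = 0) by (unfold G; rewrite RInt_point; reflexivity).
  assert (RInt f a b = G b).
  { unfold G. apply RInt_ext. intros x Hx. rewrite Rmin_left in Hx by lra.
    rewrite Rmax_right in Hx by lra. unfold fc. rewrite clamp_id; lra. }
  lra.
Qed.

Lemma RInt_gt0_of_pos_pt f a b x0 : a < b -> seg_cont a b f ->
  (forall x, a <= x <= b -> 0 <= f x) -> a <= x0 <= b -> 0 < f x0 -> 0 < RInt f a b.
Proof.
  intros Hab Hf Hpos Hx0 Hfx0.
  destruct (Hf x0 Hx0 (f x0 / 2) ltac:(lra)) as [d [Hd H]].
  set (al := Rmax a (x0 - d/2)). set (be := Rmin b (x0 + d/2)).
  assert (Hal : a <= al <= x0) by (unfold al, Rmax; destruct Rle_dec; lra).
  assert (Hbe : x0 <= be <= b) by (unfold be, Rmin; destruct Rle_dec; lra).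
  assert (Halbe : al < be) by (unfold al, be, Rmax, Rmin; repeat destruct Rle_dec; lra).
  assert (Hex : forall u v, a <= u -> u <= v -> v <= b -> ex_RInt f u v).
  { intros u v Hu Huv Hv. apply seg_cont_ex_RInt; auto. apply seg_cont_subseg with a b; auto. }
  rewrite <- (RInt_Chasles f a al b), <- (RInt_Chasles f al be b) by (apply Hex; lra).
  change (plus ?x (plus ?y ?z)) with (x + (y + z)).
  assert (0 <= RInt f a al).
  { replace 0 with ((al - a) * 0) by ring. apply RInt_ge_const; try apply Hex; try lra.
    intros x Hx. apply Hpos. lra. }
  assert (0 <= RInt f be b).
  { replace 0 with ((b - be) * 0) by ring. apply RInt_ge_const; try apply Hex; try lra.
    intros x Hx. apply Hpos. lra. }
  assert ((be - al) * (f x0 / 2) <= RInt f al be).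
  { apply RInt_ge_const; try apply Hex; try lra. intros x Hx.
    assert (Hxx : Rabs (x - x0) < d).
    { assert (x0 - d/2 <= al) by (unfold al; apply Rmax_r).
      assert (be <= x0 + d/2) by (unfold be; apply Rmin_r).
      unfold Rabs; destruct Rcase_abs; lra. }
    specialize (H x ltac:(lra) Hxx). revert H; unfold Rabs; destruct Rcase_abs; lra. }
  assert (0 < (be - al) * (f x0 / 2)) by (apply Rmult_lt_0_compat; lra).
  lra.
Qed.

(** * Functions on a rectangle *)

(* [cont_on_rect T L] unfolds to [rect_cont 0 T 0 L]. *)
Definition rect_cont (a b c d : R) (f : R -> R -> R) : Prop :=
  forall t x, a <= t <= b -> c <= x <= d -> forall e, 0 < e -> exists del, 0 < del /\
    forall s y, a <= s <= b -> c <= y <= d -> Rabs (s - t) < del -> Rabs (y - x) < del ->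
      Rabs (f s y - f t x) < e.

Definition rect_ucont (a b c d : R) (f : R -> R -> R) : Prop :=
  forall e, 0 < e -> exists del, 0 < del /\ forall t s x y,
    a <= t <= b -> a <= s <= b -> c <= x <= d -> c <= y <= d ->
    Rabs (t - s) < del -> Rabs (x - y) < del -> Rabs (f t x - f s y) < e.

Definition box_ucont (a b c d g h : R) (f : R -> R -> R -> R) : Prop :=
  forall e, 0 < e -> exists del, 0 < del /\ forall t s x x' y y',
    a <= t <= b -> a <= s <= b -> c <= x <= d -> c <= x' <= d -> g <= y <= h -> g <= y' <= h ->
    Rabs (t - s) < del -> Rabs (x - x') < del -> Rabs (y - y') < del ->
    Rabs (f t x y - f s x' y') < e.

Lemma rect_cont_ucont a b c d f : rect_cont a b c d f -> rect_ucont a b c d f.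
Proof.
  intros Hf e He.
  (* Heine's theorem via [compactness_value]: choose half a modulus of continuity at each point *)
  assert (Hex : forall p : Compactness.Tn 2 R, exists dd : posreal,
    let '(p1, (p2, _)) := p in
    a <= p1 <= b -> c <= p2 <= d -> forall s y, a <= s <= b -> c <= y <= d ->
      Rabs (s - p1) < 2 * dd -> Rabs (y - p2) < 2 * dd -> Rabs (f s y - f p1 p2) < e / 2).
  { intros [p1 [p2 []]].
    destruct (classic (a <= p1 <= b /\ c <= p2 <= d)) as [[H1 H2]|Hn].
    - destruct (Hf p1 p2 H1 H2 (e/2) ltac:(lra)) as [dd [Hdd H]].
      exists (mkposreal (dd/2) ltac:(lra)). simpl. intros _ _ s y Hs Hy Hs' Hy'.
      apply H; auto; lra.
    - exists (mkposreal 1 Rlt_0_1). intros H1 H2. exfalso; auto. }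
  set (delta := fun p => proj1_sig (constructive_indefinite_description _ (Hex p))).
  assert (Hdelta : forall p, let '(p1, (p2, _)) := p in
    a <= p1 <= b -> c <= p2 <= d -> forall s y, a <= s <= b -> c <= y <= d ->
      Rabs (s - p1) < 2 * delta p -> Rabs (y - p2) < 2 * delta p -> Rabs (f s y - f p1 p2) < e / 2).
  { intros p. unfold delta. destruct (constructive_indefinite_description _ (Hex p)) as [dd Hdd].
    simpl. exact Hdd. }
  destruct (compactness_value 2 (a, (c, tt)) (b, (d, tt)) delta) as [dl Hdl].
  exists dl; split; [apply cond_pos|].
  intros t s x y Ht Hs Hx Hy Hts Hxy.
  specialize (Hdl (t, (x, tt)) ltac:(simpl; auto)).
  apply NNPP; intro Hn; apply Hdl; intros [[p1 [p2 []]] [Hb [Hc Hle]]].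
  apply Hn. simpl in Hb, Hc. destruct Hb as [Hp1 [Hp2 _]]. destruct Hc as [C1 [C2 _]].
  specialize (Hdelta (p1, (p2, tt)) Hp1 Hp2). simpl in Hdelta.
  pose proof (cond_pos (delta (p1, (p2, tt)))).
  cbn [Compactness.Tn] in *.
  assert (A1 := Hdelta t x Ht Hx ltac:(lra) ltac:(lra)).
  assert (A2 := Hdelta s y Hs Hy).
  assert (Rabs (s - p1) < 2 * delta (p1, (p2, tt))).
  { replace (s - p1) with ((s - t) + (t - p1)) by ring. eapply Rle_lt_trans. apply Rabs_triang.
    rewrite <- Rabs_Ropp in Hts. replace (- (t - s)) with (s - t) in Hts by ring.
    pose proof (Rplus_lt_compat _ _ _ _ (Rlt_le_trans _ _ _ Hts Hle) C1). lra. }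
  assert (Rabs (y - p2) < 2 * delta (p1, (p2, tt))).
  { replace (y - p2) with ((y - x) + (x - p2)) by ring. eapply Rle_lt_trans. apply Rabs_triang.
    rewrite <- Rabs_Ropp in Hxy. replace (- (x - y)) with (y - x) in Hxy by ring. lra. }
  specialize (A2 H0 H1).
  replace (f t x - f s y) with ((f t x - f p1 p2) - (f s y - f p1 p2)) by ring.
  eapply Rle_lt_trans. apply Rabs_triang. rewrite Rabs_Ropp. lra.
Qed.

Lemma rect_ucont_slice a b c d f t : rect_ucont a b c d f -> a <= t <= b -> seg_cont c d (f t).
Proof.
  intros Hf Ht x Hx e He. destruct (Hf e He) as [del [Hd H]]. exists del; split; auto.
  intros y Hy Hyx. apply H; auto. rewrite Rminus_diag, Rabs_R0; auto.
Qed.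

Lemma rect_cont_slice a b c d f t : rect_cont a b c d f -> a <= t <= b -> seg_cont c d (f t).
Proof.
  intros Hf Ht x Hx e He. destruct (Hf t x Ht Hx e He) as [del [Hd H]]. exists del; split; auto.
  intros. apply H; auto. rewrite Rminus_diag, Rabs_R0; auto.
Qed.

Lemma max_of_partial_max {X : Type} a b (K : X -> Prop) (f : R -> X -> R) : a <= b ->
  (forall t, a <= t <= b -> exists p, K p /\ forall q, K q -> f t q <= f t p) ->
  (forall e, 0 < e -> exists del, 0 < del /\ forall t s p, a <= t <= b -> a <= s <= b -> K p ->
     Rabs (t - s) < del -> Rabs (f t p - f s p) < e) ->
  exists t0 p0, a <= t0 <= b /\ K p0 /\ forall t q, a <= t <= b -> K q -> f t q <= f t0 p0.
Proof.
  intros Hab Hpart Hf.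
  destruct (Hpart a ltac:(lra)) as [pa [Kpa _]].
  assert (Hex : forall t, exists p, a <= t <= b -> K p /\ forall q, K q -> f t q <= f t p).
  { intros t. destruct (classic (a <= t <= b)) as [Ht|Hn].
    - destruct (Hpart t Ht) as [p Hp]. exists p; auto.
    - exists pa. intros; exfalso; auto. }
  set (argmax := fun t => proj1_sig (constructive_indefinite_description _ (Hex t))).
  assert (Harg : forall t, a <= t <= b -> K (argmax t) /\ forall q, K q -> f t q <= f t (argmax t)).
  { intros t. unfold argmax. destruct (constructive_indefinite_description _ (Hex t)) as [p Hp].
    exact Hp. }
  (* the partial maximum is continuous in [t] because [f] is equicontinuous in [t] *)
  assert (HF : seg_cont a b (fun t => f t (argmax t))).
  { intros t Ht e He. destruct (Hf e He) as [del [Hd H]]. exists del; split; auto.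
    intros s Hs Hst. destruct (Harg t Ht) as [Kt Ht']. destruct (Harg s Hs) as [Ks Hs'].
    assert (A1 := H s t (argmax t) Hs Ht Kt Hst).
    assert (A2 := H t s (argmax s) Ht Hs Ks ltac:(rewrite Rabs_minus_sym; auto)).
    specialize (Ht' (argmax s) Ks). specialize (Hs' (argmax t) Kt).
    revert A1 A2; unfold Rabs; repeat destruct Rcase_abs; intros; lra. }
  destruct (seg_cont_max a b _ Hab HF) as [t0 [Ht0 H0]].
  exists t0, (argmax t0). split; [auto|split; [apply Harg; auto|]].
  intros t q Ht Kq. eapply Rle_trans; [apply (proj2 (Harg t Ht)); auto|apply H0; auto].
Qed.

Lemma rect_ucont_max a b c d f : a <= b -> c <= d -> rect_ucont a b c d f ->
  exists t0 x0, a <= t0 <= b /\ c <= x0 <= d /\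
    forall t x, a <= t <= b -> c <= x <= d -> f t x <= f t0 x0.
Proof.
  intros Hab Hcd Hf.
  apply (max_of_partial_max a b (fun x => c <= x <= d) f Hab).
  - intros t Ht. apply seg_cont_max; auto. apply (rect_ucont_slice a b); auto.
  - intros e He. destruct (Hf e He) as [del [Hd H]]. exists del; split; auto.
    intros t s x Ht Hs Hx Hts. apply H; auto. rewrite Rminus_diag, Rabs_R0; auto.
Qed.

Lemma box_ucont_max a b c d g h f : a <= b -> c <= d -> g <= h -> box_ucont a b c d g h f ->
  exists t0 x0 y0, a <= t0 <= b /\ c <= x0 <= d /\ g <= y0 <= h /\
    forall t x y, a <= t <= b -> c <= x <= d -> g <= y <= h -> f t x y <= f t0 x0 y0.
Proof.
  intros Hab Hcd Hgh Hf.
  destruct (max_of_partial_max a b (fun p : R * R => c <= fst p <= d /\ g <= snd p <= h)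
    (fun t p => f t (fst p) (snd p)) Hab) as [t0 [[x0 y0] [Ht0 [[Hx0 Hy0] Hmax]]]].
  - intros t Ht. destruct (rect_ucont_max c d g h (f t) Hcd Hgh) as [x [y [Hx [Hy H]]]].
    + intros e He. destruct (Hf e He) as [del [Hd H]]. exists del; split; auto.
      intros. apply H; auto. rewrite Rminus_diag, Rabs_R0; auto.
    + exists (x, y). simpl. split; auto. intros [x' y'] [Hx' Hy']. apply H; auto.
  - intros e He. destruct (Hf e He) as [del [Hd H]]. exists del; split; auto.
    intros t s [x y] Ht Hs [Hx Hy] Hts. apply H; auto; rewrite Rminus_diag, Rabs_R0; auto.
  - exists t0, x0, y0. split; auto; split; auto; split; auto.
    intros t x y Ht Hx Hy. apply (Hmax t (x, y)); auto.
Qed.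

Definition rect_clamp a b c d (f : R -> R -> R) := fun u v => f (clamp a b u) (clamp c d v).

Lemma rect_cont_clamp a b c d f : a <= b -> c <= d -> rect_cont a b c d f ->
  forall x y, continuity_2d_pt (rect_clamp a b c d f) x y.
Proof.
  intros Hab Hcd Hf x y eps.
  destruct (Hf (clamp a b x) (clamp c d y) (clamp_in _ _ _ Hab) (clamp_in _ _ _ Hcd)
    eps (cond_pos eps)) as [del [Hd H]].
  exists (mkposreal del Hd). intros u v Hu Hv. simpl in Hu, Hv. unfold rect_clamp.
  apply H; try apply clamp_in; auto; eapply Rle_lt_trans; try apply clamp_lipschitz; auto.
Qed.

Lemma rect_cont_of_continuity_2d_pt a b c d f F :
  (forall x y, a <= x <= b -> c <= y <= d -> f x y = F x y) ->
  (forall x y, a <= x <= b -> c <= y <= d -> continuity_2d_pt F x y) -> rect_cont a b c d f.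
Proof.
  intros Heq Hc t x Ht Hx e He. destruct (Hc t x Ht Hx (mkposreal e He)) as [del H].
  exists del; split; [apply cond_pos|]. intros s y Hs Hy H1 H2. rewrite !Heq by auto.
  apply (H s y H1 H2).
Qed.

Lemma rect_clamp_id a b c d f x y : a <= x <= b -> c <= y <= d -> rect_clamp a b c d f x y = f x y.
Proof. intros; unfold rect_clamp; rewrite !clamp_id; auto. Qed.

Lemma rect_cont_mult a b c d f g : a <= b -> c <= d -> rect_cont a b c d f -> rect_cont a b c d g ->
  rect_cont a b c d (fun t x => f t x * g t x).
Proof.
  intros Hab Hcd Hf Hg.
  apply rect_cont_of_continuity_2d_pt with
    (fun u v => rect_clamp a b c d f u v * rect_clamp a b c d g u v).
  - intros; rewrite !rect_clamp_id; auto.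
  - intros; apply continuity_2d_pt_mult; apply rect_cont_clamp; auto.
Qed.

Lemma rect_cont_comp a b c d f g : a <= b -> c <= d -> rect_cont a b c d f ->
  (forall z, continuity_pt g z) -> rect_cont a b c d (fun t x => g (f t x)).
Proof.
  intros Hab Hcd Hf Hg.
  apply rect_cont_of_continuity_2d_pt with (fun u v => g (rect_clamp a b c d f u v)).
  - intros; rewrite !rect_clamp_id; auto.
  - intros; apply continuity_1d_2d_pt_comp; auto; apply rect_cont_clamp; auto.
Qed.

Lemma rect_cont_abs a b c d f : rect_cont a b c d f -> rect_cont a b c d (fun t x => Rabs (f t x)).
Proof.
  intros Hf t x Ht Hx e He. destruct (Hf t x Ht Hx e He) as [del [Hd H]].
  exists del; split; auto. intros. eapply Rle_lt_trans. apply Rabs_triang_inv2. auto.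
Qed.

Lemma rect_cont_opp a b c d f : rect_cont a b c d f -> rect_cont a b c d (fun t x => - f t x).
Proof.
  intros Hf t x Ht Hx e He. destruct (Hf t x Ht Hx e He) as [del [Hd H]].
  exists del; split; auto. intros s y Hs Hy H1 H2.
  replace (- f s y - - f t x) with (- (f s y - f t x)) by ring. rewrite Rabs_Ropp; auto.
Qed.

Lemma rect_cont_reflect T L f : rect_cont 0 T 0 L f -> rect_cont 0 T 0 L (fun t x => f t (L - x)).
Proof.
  intros Hf t x Ht Hx e He. destruct (Hf t (L - x) Ht ltac:(lra) e He) as [d [Hd H]].
  exists d; split; auto. intros s y Hs Hy H1 H2. apply H; auto; try lra.
  replace (L - y - (L - x)) with (- (y - x)) by ring. rewrite Rabs_Ropp; auto.
Qed.

Lemma rect_le_of_interior_le T L f B : 0 < T -> 0 < L -> rect_cont 0 T 0 L f ->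
  (forall t x, 0 < t < T -> 0 < x < L -> f t x <= B) ->
  forall t x, 0 <= t <= T -> 0 <= x <= L -> f t x <= B.
Proof.
  intros HT HL Hf HB t x Ht Hx. apply Rnot_lt_le; intro Hlt.
  destruct (Hf t x Ht Hx (f t x - B) ltac:(lra)) as [del [Hd H]].
  (* move [(t, x)] a little towards the centre of the rectangle *)
  set (lam := Rmin (1/2) (del / (2 * (T + L)))).
  assert (Hlam : 0 < lam <= 1/2).
  { unfold lam. split. apply Rmin_case; [lra|]. apply Rdiv_lt_0_compat; lra. apply Rmin_l. }
  assert (Hlam2 : lam * (T + L) < del).
  { assert (lam <= del / (2 * (T + L))) by (unfold lam; apply Rmin_r).
    apply Rle_lt_trans with (del / (2 * (T + L)) * (T + L)).
    - apply Rmult_le_compat_r; lra.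
    - replace (del / (2 * (T + L)) * (T + L)) with (del / 2) by (field; lra). lra. }
  set (s := (1 - lam) * t + lam * (T / 2)). set (y := (1 - lam) * x + lam * (L / 2)).
  assert (Hs : 0 < s < T) by (unfold s; split; nra).
  assert (Hy : 0 < y < L) by (unfold y; split; nra).
  assert (Hst : Rabs (s - t) < del).
  { unfold s. replace ((1 - lam) * t + lam * (T / 2) - t) with (lam * (T/2 - t)) by ring.
    rewrite Rabs_mult, Rabs_right by lra. apply Rle_lt_trans with (lam * (T + L)); auto.
    apply Rmult_le_compat_l; [lra|]. unfold Rabs; destruct Rcase_abs; lra. }
  assert (Hyx : Rabs (y - x) < del).
  { unfold y. replace ((1 - lam) * x + lam * (L / 2) - x) with (lam * (L/2 - x)) by ring.
    rewrite Rabs_mult, Rabs_right by lra. apply Rle_lt_trans with (lam * (T + L)); auto.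
    apply Rmult_le_compat_l; [lra|]. unfold Rabs; destruct Rcase_abs; lra. }
  specialize (H s y ltac:(lra) ltac:(lra) Hst Hyx). specialize (HB s y Hs Hy).
  revert H; unfold Rabs; destruct Rcase_abs; lra.
Qed.

Lemma is_derive_RInt_rect a b c d f ft : a < b -> c < d ->
  (forall t, a <= t <= b -> seg_cont c d (f t)) -> rect_ucont a b c d ft ->
  (forall t x, a < t < b -> c < x < d -> is_derive (fun s => f s x) t (ft t x)) ->
  forall t, a < t < b -> is_derive (fun s => RInt (f s) c d) t (RInt (ft t) c d).
Proof.
  intros Hab Hcd Hf Hft Hd t Ht.
  apply is_derive_Reals. intros eps Heps.
  destruct (Hft (eps / (2 * (d - c))) ltac:(apply Rdiv_lt_0_compat; lra)) as [d1 [Hd1 H1]].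
  set (del := Rmin d1 (Rmin (t - a) (b - t))).
  assert (Hdel : 0 < del) by (unfold del; repeat apply Rmin_case; lra).
  exists (mkposreal del Hdel). intros h Hh0 Hh. simpl in Hh.
  assert (Hh1 : Rabs h < d1) by (eapply Rlt_le_trans; [apply Hh| unfold del; apply Rmin_l]).
  assert (Hh2 : a < t + h < b).
  { assert (del <= t - a) by (unfold del; eapply Rle_trans; [apply Rmin_r|apply Rmin_l]).
    assert (del <= b - t) by (unfold del; eapply Rle_trans; [apply Rmin_r|apply Rmin_r]).
    revert Hh; unfold Rabs; destruct Rcase_abs; intros; lra. }
  assert (Ex1 : ex_RInt (f (t + h)) c d) by (apply seg_cont_ex_RInt; [lra|apply Hf; lra]).
  assert (Ex2 : ex_RInt (f t) c d) by (apply seg_cont_ex_RInt; [lra|apply Hf; lra]).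
  assert (Ex3 : ex_RInt (ft t) c d)
    by (apply seg_cont_ex_RInt; [lra|apply (rect_ucont_slice a b); auto; lra]).
  assert (Heq : RInt (f (t + h)) c d - RInt (f t) c d - h * RInt (ft t) c d =
     RInt (fun x => f (t + h) x - f t x - h * ft t x) c d).
  { rewrite RInt_minusR, RInt_minusR, RInt_scalR; auto.
    apply ex_RInt_minusR; auto. apply ex_RInt_scalR; auto. }
  assert (Hbd : Rabs (RInt (fun x => f (t + h) x - f t x - h * ft t x) c d)
                <= (d - c) * (Rabs h * (eps / (2 * (d - c))))).
  { apply Rabs_RInt_le_const; [lra| |].
    { apply ex_RInt_minusR. apply ex_RInt_minusR; auto. apply ex_RInt_scalR; auto. }
    intros x Hx. apply (Rabs_increment_sub_derive_le (fun s => f s x) (fun s => ft s x)).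
    - intros s Hs. apply Hd; auto. revert Hs. unfold Rmin, Rmax; destruct Rle_dec; lra.
    - intros s Hs. left. apply H1; try lra.
      + revert Hs. unfold Rmin, Rmax; destruct Rle_dec; lra.
      + revert Hs Hh1. unfold Rmin, Rmax; destruct Rle_dec; unfold Rabs;
          repeat destruct Rcase_abs; intros; lra.
      + rewrite Rminus_diag, Rabs_R0; auto. }
  rewrite <- Heq in Hbd.
  replace ((d - c) * (Rabs h * (eps / (2 * (d - c))))) with (Rabs h * (eps / 2)) in Hbd
    by (field; lra).
  assert (Hhp : 0 < Rabs h) by (apply Rabs_pos_lt; auto).
  replace ((RInt (f (t + h)) c d - RInt (f t) c d) / h - RInt (ft t) c d) with
    ((RInt (f (t + h)) c d - RInt (f t) c d - h * RInt (ft t) c d) / h) by (field; auto).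
  unfold Rdiv. rewrite Rabs_mult, Rabs_inv.
  apply Rle_lt_trans with (Rabs h * (eps / 2) * / Rabs h).
  - apply Rmult_le_compat_r; auto. left; apply Rinv_0_lt_compat; auto.
  - replace (Rabs h * (eps / 2) * / Rabs h) with (eps / 2) by (field; lra). lra.
Qed.

Lemma seg_cont_RInt_rect a b c d f : a <= b -> c < d -> rect_ucont a b c d f ->
  seg_cont a b (fun s => RInt (f s) c d).
Proof.
  intros Hab Hcd Hf t Ht e He.
  destruct (Hf (e / (2 * (d - c))) ltac:(apply Rdiv_lt_0_compat; lra)) as [del [Hd H]].
  exists del; split; auto. intros s Hs Hst.
  rewrite <- RInt_minusR by (apply seg_cont_ex_RInt; [lra|apply (rect_ucont_slice a b); auto]).
  eapply Rle_lt_trans.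
  - apply Rabs_RInt_le_const with (c := e / (2 * (d - c))); [lra| |].
    + apply ex_RInt_minusR; (apply seg_cont_ex_RInt; [lra|apply (rect_ucont_slice a b); auto]).
    + intros x Hx. left. apply H; auto; try lra. rewrite Rminus_diag, Rabs_R0; auto.
  - replace ((d - c) * (e / (2 * (d - c)))) with (e / 2) by (field; lra). lra.
Qed.

(** * The Fokker-Planck equation *)

Definition negcube (s : R) : R := - Rmin s 0 ^ 3.
Definition dnegcube (s : R) : R := - (3 * Rmin s 0 ^ 2).
Definition d2negcube (s : R) : R := - (6 * Rmin s 0).

Lemma Rmin0_mul s : s * Rmin s 0 = Rmin s 0 ^ 2.
Proof. unfold Rmin; destruct Rle_dec; ring. Qed.

Lemma Rmin0_cube s : Rmin s 0 ^ 3 = s * Rmin s 0 ^ 2.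
Proof. unfold Rmin; destruct Rle_dec; ring. Qed.

Lemma is_derive_Rmin0_sqr s : is_derive (fun z => Rmin z 0 ^ 2) s (2 * Rmin s 0).
Proof.
  destruct (Rtotal_order s 0) as [Hs|[->|Hs]].
  - apply is_derive_ext_loc with (fun z => z ^ 2).
    + apply (locally_interior (s - 1) 0); [lra|]. intros y Hy. now rewrite Rmin_left by lra.
    + rewrite Rmin_left by lra. auto_derive; auto; ring.
  - apply is_derive_Reals. intros e He. exists (mkposreal e He). intros h Hh0 Hh. simpl in Hh.
    rewrite Rplus_0_l, (Rmin_left 0 0) by lra.
    destruct (Rle_lt_dec h 0) as [Hn|Hp].
    + rewrite Rmin_left by lra.
      replace ((h ^ 2 - 0 ^ 2) / h - 2 * 0) with h by (field; lra). auto.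
    + rewrite Rmin_right by lra.
      replace ((0 ^ 2 - 0 ^ 2) / h - 2 * 0) with 0 by (field; lra). rewrite Rabs_R0; auto.
  - apply is_derive_ext_loc with (fun _ => 0).
    + apply (locally_interior 0 (s + 1)); [lra|]. intros y Hy.
      rewrite Rmin_right by lra. simpl. now rewrite Rmult_0_l.
    + rewrite Rmin_right by lra. rewrite Rmult_0_r. apply is_derive_constR.
Qed.

Lemma is_derive_negcube s : is_derive negcube s (dnegcube s).
Proof.
  apply is_derive_ext with (fun z => - (z * Rmin z 0 ^ 2)).
  { intros z. unfold negcube. now rewrite Rmin0_cube. }
  unfold dnegcube. apply (is_derive_opp (fun z => z * Rmin z 0 ^ 2)).
  replace (3 * Rmin s 0 ^ 2) with (1 * Rmin s 0 ^ 2 + s * (2 * Rmin s 0))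
    by (rewrite <- Rmin0_mul; ring).
  apply (is_derive_multR (fun z => z)); [apply is_derive_idR|apply is_derive_Rmin0_sqr].
Qed.

Lemma is_derive_dnegcube s : is_derive dnegcube s (d2negcube s).
Proof.
  unfold dnegcube, d2negcube. apply (is_derive_opp (fun z => 3 * Rmin z 0 ^ 2)).
  replace (6 * Rmin s 0) with (3 * (2 * Rmin s 0)) by ring.
  apply is_derive_scalR, is_derive_Rmin0_sqr.
Qed.

Lemma continuity_pt_negcube s : continuity_pt negcube s.
Proof. apply is_derive_continuity_pt with (dnegcube s), is_derive_negcube. Qed.

Lemma continuity_pt_dnegcube s : continuity_pt dnegcube s.
Proof. apply is_derive_continuity_pt with (d2negcube s), is_derive_dnegcube. Qed.

Lemma continuity_pt_d2negcube s : continuity_pt d2negcube s.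
Proof.
  intros e He. exists (e / 6); split; [lra|]. intros y [_ Hy]. simpl in *. unfold R_dist in *.
  unfold d2negcube.
  replace (- (6 * Rmin y 0) - - (6 * Rmin s 0)) with (- 6 * (Rmin y 0 - Rmin s 0)) by ring.
  rewrite Rabs_mult, Rabs_left by lra.
  assert (Rabs (Rmin y 0 - Rmin s 0) <= Rabs (y - s))
    by (unfold Rmin; repeat destruct Rle_dec; unfold Rabs; repeat destruct Rcase_abs; lra).
  lra.
Qed.

Lemma negcube_ge0 s : 0 <= negcube s.
Proof.
  unfold negcube. destruct (Rle_dec s 0).
  - rewrite Rmin_left by lra. replace (- s ^ 3) with (- s * (s * s)) by ring.
    apply Rmult_le_pos; nra.
  - rewrite Rmin_right by lra. lra.
Qed.

Lemma negcube_gt0 s : s < 0 -> 0 < negcube s.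
Proof.
  intros. unfold negcube. rewrite Rmin_left by lra. replace (- s ^ 3) with (- s * (s * s)) by ring.
  apply Rmult_lt_0_compat; nra.
Qed.

Lemma negcube_eq0 s : 0 <= s -> negcube s = 0.
Proof. intros. unfold negcube. rewrite Rmin_right by lra. ring. Qed.

Lemma negcube_young (sig2 G Gb a m : R) : 0 < sig2 -> Rabs G <= Gb ->
  - (d2negcube m * a * (sig2 * a + G * m)) <= 3 * Gb ^ 2 / (2 * sig2) * negcube m.
Proof.
  intros Hs HG. unfold d2negcube, negcube. destruct (Rle_lt_dec 0 m) as [Hm|Hm].
  - rewrite Rmin_right by lra. lra.
  - rewrite Rmin_left by lra. set (p := - m).
    assert (HG2 : G ^ 2 <= Gb ^ 2).
    { rewrite <- (pow2_abs G). apply pow_incr. split; [apply Rabs_pos|auto]. }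
    (* [G p a - sig2 a^2 <= G^2 p^2 / (4 sig2)] is AM-GM *)
    assert (H1 : 4 * sig2 * (G * p * a - sig2 * a ^ 2) <= G ^ 2 * p ^ 2).
    { assert (0 <= (G * p - 2 * sig2 * a) ^ 2) by apply pow2_ge_0. nra. }
    assert (H2 : G * p * a - sig2 * a ^ 2 <= Gb ^ 2 * p ^ 2 / (4 * sig2)).
    { apply Rmult_le_reg_l with (4 * sig2); [lra|].
      replace (4 * sig2 * (Gb ^ 2 * p ^ 2 / (4 * sig2))) with (Gb ^ 2 * p ^ 2) by (field; lra).
      assert (G ^ 2 * p ^ 2 <= Gb ^ 2 * p ^ 2) by (apply Rmult_le_compat_r; [apply pow2_ge_0|auto]).
      lra. }
    replace m with (- p) by (unfold p; ring).
    replace (- (- (6 * - p) * a * (sig2 * a + G * - p))) with (6 * p * (G * p * a - sig2 * a ^ 2))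
      by ring.
    replace (3 * Gb ^ 2 / (2 * sig2) * - (- p) ^ 3) with (6 * p * (Gb ^ 2 * p ^ 2 / (4 * sig2)))
      by (field; lra).
    apply Rmult_le_compat_l; [unfold p; lra|exact H2].
Qed.

Section FokkerPlanck.

Variables (T L sig2 Gb : R) (m mt mx mxx g gx : R -> R -> R) (m0 : R -> R).

Hypotheses (HT : 0 < T) (HL : 0 < L) (Hsig : 0 < sig2)
  (Hm : C12 T L m mt mx mxx)
  (Hg_cont : forall t, 0 < t < T -> seg_cont 0 L (g t) /\ seg_cont 0 L (gx t))
  (Hg_derive : forall t x, 0 < t < T -> 0 < x < L -> is_derive (g t) x (gx t x))
  (Hg_bound : forall t x, 0 < t < T -> 0 <= x <= L -> Rabs (g t x) <= Gb)
  (Hfp : forall t x, 0 < t < T -> 0 < x < L ->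
     mt t x = sig2 * mxx t x + (gx t x * m t x + g t x * mx t x))
  (Hflux_bc : forall t, 0 < t < T ->
     sig2 * mx t 0 + g t 0 * m t 0 = 0 /\ sig2 * mx t L + g t L * m t L = 0)
  (Hinit : forall x, 0 <= x <= L -> m 0 x = m0 x).

Let flux t x := sig2 * mx t x + g t x * m t x.

Let m_derive t x : 0 < t < T -> 0 < x < L ->
  is_derive (fun s => m s x) t (mt t x) /\ is_derive (m t) x (mx t x) /\
  is_derive (mx t) x (mxx t x).
Proof. apply (proj1 Hm). Qed.

Let m_ucont : rect_ucont 0 T 0 L m.
Proof. apply rect_cont_ucont, (proj1 (proj2 Hm)). Qed.

Let mt_ucont : rect_ucont 0 T 0 L mt.
Proof. apply rect_cont_ucont, (proj1 (proj2 (proj2 Hm))). Qed.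

Let m_slice t : 0 <= t <= T -> seg_cont 0 L (m t).
Proof. intros; apply (rect_ucont_slice 0 T); auto. Qed.

Let mx_slice t : 0 <= t <= T -> seg_cont 0 L (mx t).
Proof. intros; apply (rect_cont_slice 0 T); auto. apply (proj2 Hm). Qed.

Let mt_slice t : 0 <= t <= T -> seg_cont 0 L (mt t).
Proof. intros; apply (rect_ucont_slice 0 T); auto. Qed.

Lemma flux_seg_cont t : 0 < t < T -> seg_cont 0 L (flux t).
Proof.
  intros Ht. destruct (Hg_cont t Ht). unfold flux.
  apply seg_cont_plus; [lra| |]; apply seg_cont_mult; try lra; auto using seg_cont_const.
  apply mx_slice; lra. apply m_slice; lra.
Qed.

Lemma flux_derive t x : 0 < t < T -> 0 < x < L -> is_derive (flux t) x (mt t x).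
Proof.
  intros Ht Hx. rewrite Hfp by auto. destruct (m_derive t x Ht Hx) as [_ [Dm Dmx]].
  apply is_derive_plusR; [apply is_derive_scalR, Dmx|].
  apply (is_derive_multR (g t) (m t)); auto.
Qed.

Lemma RInt_mt_eq0 t : 0 < t < T -> RInt (mt t) 0 L = 0.
Proof.
  intros Ht. rewrite (RInt_seg_derive 0 L (flux t)); auto using flux_seg_cont.
  - unfold flux. destruct (Hflux_bc t Ht). lra.
  - apply mt_slice; lra.
  - intros; apply flux_derive; auto.
Qed.

Lemma fp_mass_conserved t : 0 <= t <= T -> RInt (m t) 0 L = RInt m0 0 L.
Proof.
  intros Ht.
  assert (H0 : RInt (m 0) 0 L = RInt m0 0 L).
  { apply RInt_ext. intros x Hx. rewrite Rmin_left, Rmax_right in Hx by lra. apply Hinit; lra. }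
  destruct (Rle_lt_or_eq_dec 0 t (proj1 Ht)) as [Htp|<-]; auto.
  destruct (mvt_seg (fun s => RInt (m s) 0 L) (fun _ => 0) 0 t Htp) as [c [Hc Hmvt]].
  - apply seg_cont_subseg with 0 T; try lra. apply seg_cont_RInt_rect; auto; lra.
  - intros s Hs.
    assert (D := is_derive_RInt_rect 0 T 0 L m mt HT HL ltac:(intros; apply m_slice; lra) mt_ucont
      ltac:(intros; apply m_derive; auto) s ltac:(lra)).
    rewrite RInt_mt_eq0 in D by lra. exact D.
  - lra.
Qed.

Let kappa := 3 * Gb ^ 2 / (2 * sig2).

Let energy s := RInt (fun x => negcube (m s x)) 0 L.

Let negcube_m_cont : rect_cont 0 T 0 L (fun s x => negcube (m s x)).
Proof. apply rect_cont_comp; try lra. apply (proj2 Hm). apply continuity_pt_negcube. Qed.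

Let negcube_m_slice t : 0 <= t <= T -> seg_cont 0 L (fun x => negcube (m t x)).
Proof. exact (rect_cont_slice 0 T 0 L (fun s x => negcube (m s x)) t negcube_m_cont). Qed.

Lemma energy_seg_cont : seg_cont 0 T energy.
Proof. apply seg_cont_RInt_rect; try lra. apply rect_cont_ucont, negcube_m_cont. Qed.

Lemma energy_derive s : 0 < s < T ->
  is_derive energy s (RInt (fun x => dnegcube (m s x) * mt s x) 0 L).
Proof.
  intros Hs. apply (is_derive_RInt_rect 0 T 0 L (fun s x => negcube (m s x))
    (fun s x => dnegcube (m s x) * mt s x)); try lra.
  - exact negcube_m_slice.
  - apply rect_cont_ucont, rect_cont_mult; try lra; [|apply (proj2 Hm)].
    apply rect_cont_comp; try lra; [apply (proj2 Hm)|apply continuity_pt_dnegcube].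
  - intros t x Ht Hx. apply (is_derive_compR negcube (fun s => m s x)).
    + apply is_derive_negcube.
    + apply (m_derive t x Ht Hx).
Qed.

Lemma energy_derive_le s : 0 < s < T ->
  RInt (fun x => dnegcube (m s x) * mt s x) 0 L <= kappa * energy s.
Proof.
  intros Hs. destruct (Hg_cont s Hs) as [Hgs Hgxs].
  assert (Hms := m_slice s ltac:(lra)). assert (Hmxs := mx_slice s ltac:(lra)).
  assert (C1 : seg_cont 0 L (fun x => dnegcube (m s x)))
    by (apply seg_cont_comp; auto; try lra; apply continuity_pt_dnegcube).
  assert (C2 : seg_cont 0 L (fun x => d2negcube (m s x)))
    by (apply seg_cont_comp; auto; try lra; apply continuity_pt_d2negcube).
  set (B := fun x => d2negcube (m s x) * mx s x * flux s x).
  set (A := fun x => dnegcube (m s x) * mt s x).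
  assert (SB : seg_cont 0 L B).
  { unfold B. apply seg_cont_mult; [lra| |apply flux_seg_cont; auto].
    apply seg_cont_mult; auto; lra. }
  assert (SA : seg_cont 0 L A)
    by (unfold A; apply seg_cont_mult; auto; try lra; apply mt_slice; lra).
  (* integration by parts: the boundary term [dnegcube m * flux] vanishes by the flux condition *)
  assert (Hparts : RInt (fun x => B x + A x) 0 L = 0).
  { rewrite (RInt_seg_derive 0 L (fun x => dnegcube (m s x) * flux s x)); try lra.
    - unfold flux. destruct (Hflux_bc s Hs) as [-> ->]. rewrite !Rmult_0_r. lra.
    - apply seg_cont_mult; auto using flux_seg_cont; lra.
    - apply seg_cont_plus; auto; lra.
    - intros x Hx. unfold A, B.
      apply (is_derive_multR (fun y => dnegcube (m s y)) (flux s)); [|apply flux_derive; auto].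
      apply (is_derive_compR dnegcube (m s)); [apply is_derive_dnegcube|apply m_derive; auto]. }
  rewrite RInt_plusR in Hparts by (apply seg_cont_ex_RInt; auto; lra).
  fold A. replace (RInt A 0 L) with (RInt (fun x => -1 * B x) 0 L)
    by (rewrite RInt_scalR by (apply seg_cont_ex_RInt; auto; lra); lra).
  unfold energy. rewrite <- RInt_scalR
    by (apply seg_cont_ex_RInt; [lra|apply negcube_m_slice; lra]).
  apply RInt_le; [lra| | |].
  - apply ex_RInt_scalR, seg_cont_ex_RInt; auto; lra.
  - apply ex_RInt_scalR, seg_cont_ex_RInt; [lra|apply negcube_m_slice; lra].
  - intros x Hx. unfold B, flux, kappa.
    replace (-1 * (d2negcube (m s x) * mx s x * (sig2 * mx s x + g s x * m s x)))
      with (- (d2negcube (m s x) * mx s x * (sig2 * mx s x + g s x * m s x))) by ring.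
    apply negcube_young; auto. apply Hg_bound; lra.
Qed.

Lemma fp_nonneg : (forall x, 0 <= x <= L -> 0 <= m0 x) ->
  forall t x, 0 <= t <= T -> 0 <= x <= L -> 0 <= m t x.
Proof.
  intros Hm0 t x Ht Hx.
  destruct (Rle_lt_or_eq_dec 0 t (proj1 Ht)) as [Htp|<-]; [|rewrite Hinit; auto].
  apply Rnot_lt_le; intro Hneg.
  (* the energy vanishes at time 0 and [energy' <= kappa * energy], so it stays [<= 0] *)
  assert (HE0 : energy 0 = 0).
  { unfold energy. rewrite (RInt_ext _ (fun _ => 0)), RInt_constR; [lra|].
    intros y Hy. rewrite Rmin_left, Rmax_right in Hy by lra.
    rewrite Hinit by lra. apply negcube_eq0, Hm0; lra. }
  destruct (mvt_exp_weighted kappa 0 t energy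
              (fun s => RInt (fun x => dnegcube (m s x) * mt s x) 0 L))
    as [c [Hc Hmvt]]; [lra| | |].
  { apply seg_cont_subseg with 0 T; try lra. apply energy_seg_cont. }
  { intros; apply energy_derive; lra. }
  assert (Hd := energy_derive_le c ltac:(lra)).
  assert (exp (- kappa * c) * (RInt (fun x => dnegcube (m c x) * mt c x) 0 L - kappa * energy c)
          * (t - 0) <= 0).
  { apply Rmult_le_0_r; [|lra]. apply Rmult_le_0_l; [left; apply exp_pos|lra]. }
  assert (Hpos : 0 < energy t).
  { apply (RInt_gt0_of_pos_pt _ 0 L x); [lra|apply negcube_m_slice; lra| |lra|].
    - intros; apply negcube_ge0.
    - apply negcube_gt0; auto. }
  assert (0 < exp (- kappa * t) * energy t) by (apply Rmult_lt_0_compat; auto; apply exp_pos).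
  rewrite HE0, Rmult_0_r in Hmvt. lra.
Qed.

End FokkerPlanck.

(** * The Hamilton-Jacobi-Bellman equation *)

Definition hjb_solution (T L r sig : R) (H : R -> R -> R) (u ut ux uxx : R -> R -> R) : Prop :=
  C12 T L u ut ux uxx /\
  (forall t x, 0 < t < T -> 0 < x < L -> ut t x + sig * uxx t x - r * u t x + H t (ux t x) = 0) /\
  (forall t, 0 < t < T -> ux t 0 = 0 /\ ux t L = 0).

Lemma hjb_solution_reflect T L r sig H u ut ux uxx :
  hjb_solution T L r sig H u ut ux uxx ->
  hjb_solution T L r sig (fun t p => H t (- p)) (fun t x => u t (L - x)) (fun t x => ut t (L - x))
    (fun t x => - ux t (L - x)) (fun t x => uxx t (L - x)).
Proof.
  intros [[Hd [Cu [Cut [Cux Cuxx]]]] [Heq Hbc]]. split; [split; [|split; [|split; [|split]]]|split].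
  - intros t x Ht Hx. destruct (Hd t (L - x) Ht ltac:(lra)) as [Dt [Dx Dxx]]. split; [|split].
    + exact Dt.
    + apply (is_derive_reflect (u t)), Dx.
    + rewrite <- (Ropp_involutive (uxx t (L - x))).
      apply (is_derive_opp (fun y => ux t (L - y))), (is_derive_reflect (ux t)), Dxx.
  - apply rect_cont_reflect, Cu.
  - apply rect_cont_reflect, Cut.
  - apply rect_cont_opp, rect_cont_reflect, Cux.
  - apply rect_cont_reflect, Cuxx.
  - intros t x Ht Hx. rewrite Ropp_involutive. apply Heq; lra.
  - intros t Ht. rewrite Rminus_0_r, Rminus_diag. destruct (Hbc t Ht) as [-> ->]. lra.
Qed.

Definition doubling (u : R -> R -> R) (M s x y : R) : R := u s y - u s x - M * (y - x).

Lemma Rmax_lipschitz x y x' y' d :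
  Rabs (x - x') < d -> Rabs (y - y') < d -> Rabs (Rmax x y - Rmax x' y') < d.
Proof.
  unfold Rmax; repeat destruct Rle_dec; unfold Rabs; repeat destruct Rcase_abs; intros; lra.
Qed.

Lemma doubling_max_exists T L M u t : 0 < L -> 0 < M -> rect_cont 0 T 0 L u -> 0 <= t <= T ->
  exists t0 x0 y0, t <= t0 <= T /\ 0 <= x0 <= y0 /\ y0 <= L /\
    forall s x y, t <= s <= T -> 0 <= x <= y -> y <= L ->
      doubling u M s x y <= doubling u M t0 x0 y0.
Proof.
  intros HL HM Hu Ht.
  (* maximise over the box [[t,T] x [0,L] x [0,L]], folding [y < x] back onto the diagonal *)
  set (Psi := fun s x y => doubling u M s x (Rmax x y)).
  assert (U3 : box_ucont t T 0 L 0 L Psi).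
  { intros e He. destruct (rect_cont_ucont _ _ _ _ _ Hu (e / 4) ltac:(lra)) as [du [Hdu H]].
    set (del := Rmin du (e / (4 * M))).
    assert (Hdel : 0 < del) by (unfold del; apply Rmin_case; auto; apply Rdiv_lt_0_compat; lra).
    assert (Hdel1 : del <= du) by apply Rmin_l.
    assert (Hdel2 : M * del <= e / 4).
    { assert (del <= e / (4 * M)) by apply Rmin_r.
      apply Rle_trans with (M * (e / (4 * M))); [apply Rmult_le_compat_l; lra|right; field; lra]. }
    exists del; split; auto. intros s s' x1 x1' y1 y1' Hs Hs' Hx1 Hx1' Hy1 Hy1' Hss Hxx Hyy.
    unfold Psi, doubling.
    assert (HY : Rabs (Rmax x1 y1 - Rmax x1' y1') < del) by (apply Rmax_lipschitz; auto).
    assert (HY1 : 0 <= Rmax x1 y1 <= L) by (unfold Rmax; destruct Rle_dec; lra).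
    assert (HY2 : 0 <= Rmax x1' y1' <= L) by (unfold Rmax; destruct Rle_dec; lra).
    assert (A1 := H s s' _ _ ltac:(lra) ltac:(lra) HY1 HY2 ltac:(lra) ltac:(lra)).
    assert (A2 := H s s' x1 x1' ltac:(lra) ltac:(lra) Hx1 Hx1' ltac:(lra) ltac:(lra)).
    assert (A3 : M * Rabs (Rmax x1 y1 - Rmax x1' y1') <= M * del) by (apply Rmult_le_compat_l; lra).
    assert (A4 : M * Rabs (x1 - x1') <= M * del) by (apply Rmult_le_compat_l; lra).
    revert A1 A2 A3 A4. set (Y := Rmax x1 y1). set (Y' := Rmax x1' y1').
    unfold Rabs; repeat destruct Rcase_abs; intros; nra. }
  destruct (box_ucont_max t T 0 L 0 L Psi ltac:(lra) ltac:(lra) ltac:(lra) U3)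
    as [t0 [x0 [y0 [Ht0 [Hx0 [Hy0 Hmax]]]]]].
  exists t0, x0, (Rmax x0 y0). split; [lra|split; [|split]].
  - split; [lra|apply Rmax_l].
  - unfold Rmax; destruct Rle_dec; lra.
  - intros s x y Hs Hxy Hy. specialize (Hmax s x y Hs ltac:(lra) ltac:(lra)).
    unfold Psi in Hmax. rewrite Rmax_right in Hmax by lra. exact Hmax.
Qed.

Section DoublingVariables.

Variables (T L r sig K M : R) (H : R -> R -> R) (u ut ux uxx : R -> R -> R).

Hypotheses (HL : 0 < L) (Hr : 0 < r) (Hsig : 0 <= sig) (HM : 0 < M) (HKM : K < M)
  (Hsol : hjb_solution T L r sig H u ut ux uxx)
  (Hterm : forall x y, 0 <= x <= y -> y <= L -> u T y - u T x <= K * (y - x)).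

Let u_derive t x : 0 < t < T -> 0 < x < L ->
  is_derive (fun s => u s x) t (ut t x) /\ is_derive (u t) x (ux t x) /\
  is_derive (ux t) x (uxx t x).
Proof. apply (proj1 Hsol). Qed.

Let u_slice t : 0 <= t <= T -> seg_cont 0 L (u t).
Proof. intros; apply (rect_cont_slice 0 T); auto. apply (proj1 Hsol). Qed.

Let ux_slice t : 0 <= t <= T -> seg_cont 0 L (ux t).
Proof. intros; apply (rect_cont_slice 0 T); auto. apply (proj1 Hsol). Qed.

Let doubling_derive_x s x y : 0 < s < T -> 0 < x < L ->
  is_derive (fun z => doubling u M s z y) x (M - ux s x).
Proof.
  intros Hs Hx. unfold doubling.
  replace (M - ux s x) with (0 - ux s x - M * (0 - 1)) by ring.
  apply is_derive_minusR; [apply is_derive_minusR; [apply is_derive_constR|apply u_derive; auto]|].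
  apply is_derive_scalR, is_derive_minusR; [apply is_derive_constR|apply is_derive_idR].
Qed.

Let doubling_derive_y s x y : 0 < s < T -> 0 < y < L ->
  is_derive (fun z => doubling u M s x z) y (ux s y - M).
Proof.
  intros Hs Hy. unfold doubling.
  replace (ux s y - M) with (ux s y - 0 - M * (1 - 0)) by ring.
  apply is_derive_minusR; [apply is_derive_minusR; [apply u_derive; auto|apply is_derive_constR]|].
  apply is_derive_scalR, is_derive_minusR; [apply is_derive_idR|apply is_derive_constR].
Qed.

Let doubling_cont_x s y : 0 <= s <= T -> seg_cont 0 L (fun z => doubling u M s z y).
Proof.
  intros Hs. unfold doubling. apply seg_cont_minus; [lra| |].
  - apply seg_cont_minus; [lra|apply seg_cont_const|apply u_slice; auto].
  - apply seg_cont_mult; [lra|apply seg_cont_const|].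
    apply seg_cont_minus; [lra|apply seg_cont_const|apply seg_cont_id].
Qed.

Let doubling_cont_y s x : 0 <= s <= T -> seg_cont 0 L (fun z => doubling u M s x z).
Proof.
  intros Hs. unfold doubling. apply seg_cont_minus; [lra| |].
  - apply seg_cont_minus; [lra|apply u_slice; auto|apply seg_cont_const].
  - apply seg_cont_mult; [lra|apply seg_cont_const|].
    apply seg_cont_minus; [lra|apply seg_cont_id|apply seg_cont_const].
Qed.

Section Maximizer.

Variables t0 x0 y0 : R.

Hypotheses (Ht0 : 0 < t0 <= T) (Hx0 : 0 <= x0) (Hxy0 : x0 <= y0) (Hy0 : y0 <= L)
  (Hmax : forall s x y, t0 <= s <= T -> 0 <= x <= y -> y <= L ->
     doubling u M s x y <= doubling u M t0 x0 y0)
  (Hpos : 0 < doubling u M t0 x0 y0).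

Lemma maximizer_x_lt_y : x0 < y0.
Proof.
  destruct (Rle_lt_or_eq_dec x0 y0 Hxy0) as [|<-]; auto.
  unfold doubling in Hpos. lra.
Qed.

Lemma maximizer_t_lt_T : t0 < T.
Proof.
  destruct (Rle_lt_or_eq_dec t0 T (proj2 Ht0)) as [| ->]; auto.
  unfold doubling in Hpos. specialize (Hterm x0 y0 ltac:(lra) ltac:(lra)).
  assert (K * (y0 - x0) <= M * (y0 - x0)) by (apply Rmult_le_compat_r; lra). lra.
Qed.

Let Ht0' : 0 < t0 < T.
Proof. generalize maximizer_t_lt_T; lra. Qed.

(* the Neumann condition makes the slope [M - ux] positive at [x = 0] *)
Lemma maximizer_x_gt0 : 0 < x0.
Proof.
  assert (Hy := maximizer_x_lt_y).
  destruct (Rle_lt_or_eq_dec 0 x0 Hx0) as [|<-]; auto. exfalso.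
  assert (M - ux t0 0 <= 0); [|rewrite (proj1 (proj2 (proj2 Hsol) t0 Ht0')) in *; lra].
  apply (derive_le0_of_max_at_left_end 0 y0 (fun z => doubling u M t0 z y0)
                                       (fun z => M - ux t0 z));
    auto.
  - apply seg_cont_subseg with 0 L; try lra. apply doubling_cont_x; lra.
  - apply seg_cont_minus; [lra|apply seg_cont_const|].
    apply seg_cont_subseg with 0 L; try lra. apply ux_slice; lra.
  - intros z Hz. apply doubling_derive_x; lra.
  - intros z Hz. apply Hmax; lra.
Qed.

Lemma maximizer_y_lt_L : y0 < L.
Proof.
  assert (Hx := maximizer_x_lt_y).
  destruct (Rle_lt_or_eq_dec y0 L Hy0) as [| ->]; auto. exfalso.
  assert (0 <= ux t0 L - M); [|rewrite (proj2 (proj2 (proj2 Hsol) t0 Ht0')) in *; lra].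
  apply (derive_ge0_of_max_at_right_end x0 L (fun z => doubling u M t0 x0 z)
                                        (fun z => ux t0 z - M));
    auto.
  - apply seg_cont_subseg with 0 L; try lra. apply doubling_cont_y; lra.
  - apply seg_cont_minus; [lra| |apply seg_cont_const].
    apply seg_cont_subseg with 0 L; try lra. apply ux_slice; lra.
  - intros z Hz. apply doubling_derive_y; lra.
  - intros z Hz. apply Hmax; lra.
Qed.

Let maximizer_interior : 0 < x0 /\ x0 < y0 /\ y0 < L.
Proof. split; [apply maximizer_x_gt0|split; [apply maximizer_x_lt_y|apply maximizer_y_lt_L]]. Qed.

Lemma maximizer_ux : ux t0 x0 = M /\ ux t0 y0 = M.
Proof.
  destruct maximizer_interior as [Hx [Hxy Hy]]. split.
  - enough (M - ux t0 x0 = 0) by lra.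
    apply (derive_eq0_of_local_max _ x0 _ (Rmin x0 (y0 - x0))
             (doubling_derive_x t0 x0 y0 Ht0' ltac:(lra))).
    + apply Rmin_case; lra.
    + intros z Hz. assert (Rabs (z - x0) < x0) by (eapply Rlt_le_trans; [apply Hz|apply Rmin_l]).
      assert (Rabs (z - x0) < y0 - x0) by (eapply Rlt_le_trans; [apply Hz|apply Rmin_r]).
      apply Hmax; [lra| |lra]. revert H0 H1; unfold Rabs; destruct Rcase_abs; lra.
  - enough (ux t0 y0 - M = 0) by lra.
    apply (derive_eq0_of_local_max _ y0 _ (Rmin (L - y0) (y0 - x0))
             (doubling_derive_y t0 x0 y0 Ht0' ltac:(lra))).
    + apply Rmin_case; lra.
    + intros z Hz.
      assert (Rabs (z - y0) < L - y0) by (eapply Rlt_le_trans; [apply Hz|apply Rmin_l]).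
      assert (Rabs (z - y0) < y0 - x0) by (eapply Rlt_le_trans; [apply Hz|apply Rmin_r]).
      apply Hmax; [lra| |]; revert H0 H1; unfold Rabs; destruct Rcase_abs; lra.
Qed.

(* translating both points, [s |-> doubling u M t0 (x0 + s) (y0 + s)] is maximal at [s = 0] *)
Lemma maximizer_uxx : uxx t0 y0 - uxx t0 x0 <= 0.
Proof.
  destruct maximizer_interior as [Hx [Hxy Hy]].
  set (dd := Rmin x0 (L - y0)).
  assert (Hdd : 0 < dd) by (unfold dd; apply Rmin_case; lra).
  assert (Hdd1 : dd <= x0) by apply Rmin_l. assert (Hdd2 : dd <= L - y0) by apply Rmin_r.
  assert (Hshift : forall s, Rabs (s - 0) < dd -> 0 < x0 + s < L /\ 0 < y0 + s < L).
  { intros s Hs. rewrite Rminus_0_r in Hs. revert Hs; unfold Rabs; destruct Rcase_abs; lra. }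
  apply (derive2_le0_of_local_max (fun s => u t0 (y0 + s) - u t0 (x0 + s) - M * (y0 - x0))
                                  (fun s => ux t0 (y0 + s) - ux t0 (x0 + s) - 0) 0 dd); auto.
  - intros s Hs. destruct (Hshift s Hs).
    apply is_derive_minusR; [|apply is_derive_constR].
    apply is_derive_minusR; apply is_derive_shift, u_derive; lra.
  - replace (uxx t0 y0 - uxx t0 x0) with (uxx t0 (y0 + 0) - uxx t0 (x0 + 0) - 0)
      by (rewrite !Rplus_0_r; ring).
    apply is_derive_minusR; [|apply is_derive_constR].
    apply is_derive_minusR; apply is_derive_shift, u_derive; lra.
  - intros s Hs. destruct (Hshift s Hs). rewrite !Rplus_0_r.
    specialize (Hmax t0 (x0 + s) (y0 + s) ltac:(lra) ltac:(lra) ltac:(lra)).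
    unfold doubling in Hmax.
    replace (y0 + s - (x0 + s)) with (y0 - x0) in Hmax by ring. lra.
Qed.

Lemma maximizer_ut : ut t0 y0 - ut t0 x0 <= 0.
Proof.
  destruct maximizer_interior as [Hx [Hxy Hy]].
  replace (ut t0 y0 - ut t0 x0) with (ut t0 y0 - ut t0 x0 - 0) by ring.
  apply (derive_le0_of_right_max (fun s => doubling u M s x0 y0) t0 _ (T - t0)); [|lra|].
  - unfold doubling. apply is_derive_minusR; [|apply is_derive_constR].
    apply is_derive_minusR; apply u_derive; lra.
  - intros h Hh. apply Hmax; lra.
Qed.

Lemma maximizer_absurd : False.
Proof.
  destruct maximizer_interior as [Hx [Hxy Hy]]. destruct maximizer_ux as [Ex Ey].
  assert (Eqx := proj1 (proj2 Hsol) t0 x0 Ht0' ltac:(lra)).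
  assert (Eqy := proj1 (proj2 Hsol) t0 y0 Ht0' ltac:(lra)).
  rewrite Ex in Eqx. rewrite Ey in Eqy.
  assert (sig * (uxx t0 y0 - uxx t0 x0) <= 0) by (apply Rmult_le_0_l; [lra|apply maximizer_uxx]).
  assert (0 < r * (u t0 y0 - u t0 x0)).
  { apply Rmult_lt_0_compat; auto. unfold doubling in Hpos.
    assert (0 < M * (y0 - x0)) by (apply Rmult_lt_0_compat; lra). lra. }
  generalize maximizer_ut. lra.
Qed.

End Maximizer.

Lemma hjb_one_sided_lipschitz t x y : 0 < t < T -> 0 <= x <= y -> y <= L ->
  u t y - u t x <= M * (y - x).
Proof.
  intros Ht Hxy Hy.
  destruct (doubling_max_exists T L M u t HL HM (proj1 (proj2 (proj1 Hsol))) ltac:(lra))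
    as [t0 [x0 [y0 [Ht0 [Hxy0 [Hy0 Hmax]]]]]].
  enough (doubling u M t0 x0 y0 <= 0)
    by (specialize (Hmax t x y ltac:(lra) Hxy Hy); unfold doubling in *; lra).
  apply Rnot_lt_le; intro Hpos.
  apply (maximizer_absurd t0 x0 y0); auto; try lra.
  intros s x' y' Hs. apply Hmax; lra.
Qed.

End DoublingVariables.

Lemma lipschitz_one_sided (f : R -> R) L K :
  (forall x y, 0 <= x <= L -> 0 <= y <= L -> Rabs (f y - f x) <= K * Rabs (y - x)) ->
  forall x y, 0 <= x <= y -> y <= L -> f y - f x <= K * (y - x) /\ f x - f y <= K * (y - x).
Proof.
  intros HK x y Hxy Hy. assert (A := HK x y ltac:(lra) ltac:(lra)).
  rewrite (Rabs_right (y - x)) in A by lra. apply Rabs_le_between in A. lra.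
Qed.

Lemma hjb_lipschitz T L r sig K M H u ut ux uxx :
  0 < L -> 0 < r -> 0 <= sig -> 0 < M -> K < M -> hjb_solution T L r sig H u ut ux uxx ->
  (forall x y, 0 <= x <= L -> 0 <= y <= L -> Rabs (u T y - u T x) <= K * Rabs (y - x)) ->
  forall t x y, 0 < t < T -> 0 <= x <= L -> 0 <= y <= L -> Rabs (u t y - u t x) <= M * Rabs (y - x).
Proof.
  intros HL Hr Hsig HM HKM Hsol HK.
  assert (HKs := lipschitz_one_sided (u T) L K HK).
  assert (Hup : forall t x y, 0 < t < T -> 0 <= x <= y -> y <= L -> u t y - u t x <= M * (y - x)).
  { apply (hjb_one_sided_lipschitz T L r sig K M H u ut ux uxx); auto.
    intros x y Hxy Hy. apply HKs; lra. }
  assert (Hlow : forall t x y, 0 < t < T -> 0 <= x <= y -> y <= L -> u t x - u t y <= M * (y - x)).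
  { intros t x y Ht Hxy Hy.
    (* the reflection [x |-> L - x] turns the lower bound into an upper bound *)
    assert (A : u t (L - (L - x)) - u t (L - (L - y)) <= M * (L - x - (L - y))).
    { apply (hjb_one_sided_lipschitz T L r sig K M _ (fun t x => u t (L - x)) _ _ _
        HL Hr Hsig HM HKM
        (hjb_solution_reflect _ _ _ _ _ _ _ _ _ Hsol)); try lra.
      intros x' y' Hxy' Hy'. replace (K * (y' - x')) with (K * (L - x' - (L - y'))) by ring.
      apply HKs; lra. }
    replace (L - (L - x)) with x in A by ring. replace (L - (L - y)) with y in A by ring. lra. }
  intros t x y Ht Hx Hy. apply Rabs_le_between. destruct (Rle_lt_dec x y).
  - rewrite (Rabs_right (y - x)) by lra.
    split; [generalize (Hlow t x y)|generalize (Hup t x y)]; lra.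
  - rewrite (Rabs_left (y - x)) by lra.
    split; [generalize (Hup t y x)|generalize (Hlow t y x)]; lra.
Qed.

Lemma hjb_grad_bound T L r sig K M H u ut ux uxx :
  0 < T -> 0 < L -> 0 < r -> 0 <= sig -> 0 < M -> K < M -> hjb_solution T L r sig H u ut ux uxx ->
  (forall x y, 0 <= x <= L -> 0 <= y <= L -> Rabs (u T y - u T x) <= K * Rabs (y - x)) ->
  forall t x, 0 <= t <= T -> 0 <= x <= L -> Rabs (ux t x) <= M.
Proof.
  intros HT HL Hr Hsig HM HKM Hsol HK.
  assert (Lip := hjb_lipschitz T L r sig K M H u ut ux uxx HL Hr Hsig HM HKM Hsol HK).
  apply (rect_le_of_interior_le T L (fun t x => Rabs (ux t x))); auto.
  - apply rect_cont_abs, (proj1 Hsol).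
  - intros t x Ht Hx.
    apply (Rabs_derive_le_of_lipschitz (u t) x _ (Rmin x (L - x))).
    + apply (proj1 Hsol); auto.
    + apply Rmin_case; lra.
    + intros y Hy. assert (Rabs (y - x) < x) by (eapply Rlt_le_trans; [apply Hy|apply Rmin_l]).
      assert (Rabs (y - x) < L - x) by (eapply Rlt_le_trans; [apply Hy|apply Rmin_r]).
      apply Lip; auto; revert H0 H1; unfold Rabs; destruct Rcase_abs; lra.
Qed.

Lemma exp_le_1 x : x <= 0 -> exp x <= 1.
Proof.
  intros Hx. rewrite <- exp_0. destruct (Rle_lt_or_eq_dec x 0 Hx) as [H| ->]; [|lra].
  left; apply exp_increasing, H.
Qed.

Section MeanValue.

Variables (T L r sig Qb Ub : R) (H : R -> R -> R) (u ut ux uxx : R -> R -> R).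

Hypotheses (HT : 0 < T) (HL : 0 < L) (Hr : 0 <= r)
  (Hsol : hjb_solution T L r sig H u ut ux uxx)
  (HH_cont : forall t, 0 < t < T -> seg_cont 0 L (fun x => H t (ux t x)))
  (HH_bound : forall t x, 0 < t < T -> 0 <= x <= L -> 0 <= H t (ux t x) <= Qb)
  (HuT : forall x, 0 <= x <= L -> Rabs (u T x) <= Ub).

Let mean s : R := RInt (u s) 0 L.
Let source s : R := RInt (fun x => H s (ux s x)) 0 L.

Let u_ucont : rect_ucont 0 T 0 L u.
Proof. apply rect_cont_ucont, (proj1 Hsol). Qed.

Let u_slice s : 0 <= s <= T -> seg_cont 0 L (u s).
Proof. intros; apply (rect_ucont_slice 0 T); auto. Qed.

Lemma source_bound s : 0 < s < T -> 0 <= source s <= L * Qb.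
Proof.
  intros Hs. assert (Ex := seg_cont_ex_RInt 0 L _ ltac:(lra) (HH_cont s Hs)).
  unfold source. split.
  - apply Rle_trans with ((L - 0) * 0); [lra|]. apply RInt_ge_const; auto; try lra.
    intros; apply HH_bound; lra.
  - apply Rle_trans with ((L - 0) * Qb); [|lra]. apply RInt_le_const; auto; try lra.
    intros; apply HH_bound; lra.
Qed.

Lemma hjb_mean_derive s : 0 < s < T -> is_derive mean s (r * mean s - source s).
Proof.
  intros Hs. destruct Hsol as [[Hd [_ [Cut [Cux Cuxx]]]] [Heq Hbc]].
  assert (Sux : seg_cont 0 L (ux s)) by (apply (rect_cont_slice 0 T); auto; lra).
  assert (Suxx : seg_cont 0 L (uxx s)) by (apply (rect_cont_slice 0 T); auto; lra).
  replace (r * mean s - source s) with (RInt (ut s) 0 L).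
  { apply (is_derive_RInt_rect 0 T 0 L u ut); auto; try lra.
    - apply rect_cont_ucont, Cut.
    - intros; apply Hd; auto. }
  (* integrate the equation in [x]; [uxx] integrates to [0] by the Neumann condition *)
  assert (Euxx : RInt (uxx s) 0 L = 0).
  { rewrite (RInt_seg_derive 0 L (ux s) (uxx s)); auto.
    - destruct (Hbc s Hs) as [-> ->]. lra.
    - intros; apply Hd; auto. }
  assert (ExA : ex_RInt (uxx s) 0 L) by (apply seg_cont_ex_RInt; auto; lra).
  assert (ExB : ex_RInt (u s) 0 L) by (apply seg_cont_ex_RInt; [lra|apply u_slice; lra]).
  assert (ExC : ex_RInt (fun x => H s (ux s x)) 0 L) by (apply seg_cont_ex_RInt; auto; lra).
  transitivity (RInt (fun x => (- sig * uxx s x + r * u s x) - H s (ux s x)) 0 L).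
  { apply RInt_ext. intros y Hy. rewrite Rmin_left, Rmax_right in Hy by lra.
    specialize (Heq s y Hs Hy). lra. }
  rewrite RInt_minusR, RInt_plusR, !RInt_scalR; auto.
  - now rewrite Euxx, Rmult_0_r, Rplus_0_l.
  - apply ex_RInt_scalR; auto.
  - apply ex_RInt_scalR; auto.
  - apply ex_RInt_plusR; apply ex_RInt_scalR; auto.
Qed.

Lemma hjb_mean_bound t : 0 < t < T -> Rabs (mean t) <= L * Ub + L * Qb * T.
Proof.
  intros Ht.
  destruct (mvt_exp_weighted r t T mean (fun s => r * mean s - source s)) as [c [Hc Hmvt]];
    [lra| |intros; apply hjb_mean_derive; lra|].
  { apply seg_cont_subseg with 0 T; try lra. apply seg_cont_RInt_rect; auto; lra. }
  assert (Hduhamel :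
    mean t = exp (r * (t - T)) * mean T + exp (r * (t - c)) * (source c * (T - t))).
  { replace (r * (t - T)) with (r * t + - r * T) by ring.
    replace (r * (t - c)) with (r * t + - r * c) by ring.
    rewrite !exp_plus.
    replace (mean t) with (exp (r * t) * (exp (- r * t) * mean t))
      by (rewrite <- Rmult_assoc, <- exp_plus; replace (r * t + - r * t) with 0 by ring;
          rewrite exp_0; ring).
    replace (exp (- r * t) * mean t)
      with (exp (- r * T) * mean T + exp (- r * c) * (source c * (T - t))) by lra.
    ring. }
  assert (HT1 : 0 < exp (r * (t - T)) <= 1) by (split; [apply exp_pos|apply exp_le_1; nra]).
  assert (Hc1 : 0 < exp (r * (t - c)) <= 1) by (split; [apply exp_pos|apply exp_le_1; nra]).
  assert (HmT : Rabs (mean T) <= L * Ub).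
  { replace (L * Ub) with ((L - 0) * Ub) by ring. apply Rabs_RInt_le_const; [lra| |].
    - apply seg_cont_ex_RInt; [lra|apply u_slice; lra].
    - intros; apply HuT; lra. }
  destruct (source_bound c ltac:(lra)) as [Q0 Q1].
  rewrite Hduhamel. eapply Rle_trans; [apply Rabs_triang|]. rewrite !Rabs_mult.
  rewrite (Rabs_right (exp _)), (Rabs_right (exp _)), (Rabs_right (source c)), (Rabs_right (T - t))
    by lra.
  apply Rplus_le_compat.
  - apply Rle_trans with (1 * Rabs (mean T)); [apply Rmult_le_compat_r; [apply Rabs_pos|lra]|lra].
  - apply Rle_trans with (1 * (L * Qb * T)); [|lra].
    apply Rmult_le_compat; try lra; [apply Rmult_le_pos; lra|].
    apply Rmult_le_compat; lra.
Qed.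

Lemma hjb_sup_bound M : 0 <= M ->
  (forall t x y, 0 < t < T -> 0 <= x <= L -> 0 <= y <= L ->
     Rabs (u t y - u t x) <= M * Rabs (y - x)) ->
  forall t x, 0 <= t <= T -> 0 <= x <= L -> Rabs (u t x) <= Ub + Qb * T + M * L.
Proof.
  intros HM Lip.
  apply (rect_le_of_interior_le T L (fun t x => Rabs (u t x))); auto.
  { apply rect_cont_abs, (proj1 Hsol). }
  intros t x Ht Hx.
  assert (Ex : ex_RInt (u t) 0 L) by (apply seg_cont_ex_RInt; [lra|apply u_slice; lra]).
  assert (Hosc : Rabs (L * u t x - mean t) <= L * (M * L)).
  { replace (L * u t x - mean t) with (RInt (fun y => u t x - u t y) 0 L).
    - replace (L * (M * L)) with ((L - 0) * (M * L)) by ring.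
      apply Rabs_RInt_le_const; [lra|apply ex_RInt_minusR; auto using ex_RInt_const|].
      intros y Hy. rewrite Rabs_minus_sym. eapply Rle_trans; [apply Lip; lra|].
      apply Rmult_le_compat_l; [lra|]. apply Rabs_le_between. lra.
    - rewrite RInt_minusR, RInt_constR, Rminus_0_r; auto using ex_RInt_const. }
  assert (Hmean := hjb_mean_bound t Ht).
  apply Rmult_le_reg_l with L; auto.
  replace (L * Rabs (u t x)) with (Rabs (L * u t x)) by (rewrite Rabs_mult, Rabs_right; lra).
  replace (L * u t x) with ((L * u t x - mean t) + mean t) by ring.
  eapply Rle_trans; [apply Rabs_triang|]. lra.
Qed.

End MeanValue.

(** * The mean field game system *)

Lemma seg_cont_abs_bounded a b f : a <= b -> seg_cont a b f ->
  exists B, 0 <= B /\ forall x, a <= x <= b -> Rabs (f x) <= B.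
Proof.
  intros Hab Hf.
  destruct (seg_cont_max a b (fun x => Rabs (f x)) Hab) as [x0 [Hx0 Hmax]].
  - apply seg_cont_comp; auto. intros; apply Rcontinuity_abs.
  - exists (Rabs (f x0)). split; [apply Rabs_pos|exact Hmax].
Qed.

Lemma C2gamma_bounds L gamma f f1 f2 : 0 < L -> C2gamma L gamma f f1 f2 ->
  exists K B, 0 <= K /\ 0 <= B /\ (forall x, 0 <= x <= L -> Rabs (f x) <= B) /\
    forall x y, 0 <= x <= L -> 0 <= y <= L -> Rabs (f y - f x) <= K * Rabs (y - x).
Proof.
  intros HL [Df [_ [Cf [Cf1 _]]]].
  destruct (seg_cont_abs_bounded 0 L f ltac:(lra) Cf) as [B [HB Hf]].
  destruct (seg_cont_abs_bounded 0 L f1 ltac:(lra) Cf1) as [K [HK Hf1]].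
  exists K, B. split; [|split; [|split]]; auto.
  assert (Hdir : forall x y, 0 <= x -> x < y -> y <= L -> Rabs (f y - f x) <= K * Rabs (y - x)).
  { intros x y Hx Hxy Hy. destruct (mvt_seg f f1 x y Hxy) as [c [Hc Hmvt]].
    - apply seg_cont_subseg with 0 L; auto; lra.
    - intros; apply Df; lra.
    - rewrite Hmvt, Rabs_mult. apply Rmult_le_compat_r; [apply Rabs_pos|apply Hf1; lra]. }
  intros x y Hx Hy. destruct (Rtotal_order x y) as [Hlt|[<-|Hgt]].
  - apply Hdir; lra.
  - rewrite !Rminus_diag, !Rabs_R0. lra.
  - rewrite Rabs_minus_sym, (Rabs_minus_sym y). apply Hdir; lra.
Qed.

Lemma bcoef_pos eps : 0 < eps -> 0 < bcoef eps.
Proof. intros; unfold bcoef; apply Rdiv_lt_0_compat; lra. Qed.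

Lemma ccoef_pos eps : 0 < eps -> 0 < ccoef eps.
Proof. intros; unfold ccoef; apply Rdiv_lt_0_compat; lra. Qed.

Lemma Rabs_drift_le b c P v Pb M : 0 < b -> 0 < c -> Rabs P <= Pb -> Rabs v <= M ->
  Rabs (/ 2 * (b + c * P - v)) <= / 2 * (b + c * Pb + M).
Proof.
  intros Hb Hc HP Hv. apply Rabs_le_between in HP. apply Rabs_le_between in Hv.
  assert (c * P <= c * Pb) by (apply Rmult_le_compat_l; lra).
  assert (c * - Pb <= c * P) by (apply Rmult_le_compat_l; lra).
  apply Rabs_le_between. lra.
Qed.

Section MeanFieldGame.

Variables (L T r eps sigma K Ub : R) (uT m0 : R -> R) (u ut ux uxx m mt mx mxx : R -> R -> R).

Hypotheses (HL : 0 < L) (HT : 0 < T) (Hr : 0 < r) (Heps : 0 < eps) (Hsigma : 0 < sigma)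
  (HK : 0 <= K)
  (HuT_lip : forall x y, 0 <= x <= L -> 0 <= y <= L -> Rabs (uT y - uT x) <= K * Rabs (y - x))
  (HuT_bound : forall x, 0 <= x <= L -> Rabs (uT x) <= Ub)
  (Hm0 : forall x, 0 <= x <= L -> 0 <= m0 x) (Hmass : RInt m0 0 L = 1)
  (Cu : C12 T L u ut ux uxx) (Cm : C12 T L m mt mx mxx)
  (Hhjb : forall t x, 0 < t < T -> 0 < x < L ->
     ut t x + sigma ^ 2 / 2 * uxx t x - r * u t x + (Gfun eps L ux m t x) ^ 2 = 0)
  (Hfp : forall t x, 0 < t < T -> 0 < x < L ->
     mt t x - sigma ^ 2 / 2 * mxx t x - Derive (fun y => Gfun eps L ux m t y * m t y) x = 0)
  (Hdata : forall x, 0 <= x <= L -> m 0 x = m0 x /\ u T x = uT x)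
  (Hbc_u : forall t, 0 <= t <= T -> ux t 0 = 0 /\ ux t L = 0)
  (Hbc_m : forall t, 0 <= t <= T ->
     sigma ^ 2 / 2 * mx t 0 + Gfun eps L ux m t 0 * m t 0 = 0 /\
     sigma ^ 2 / 2 * mx t L + Gfun eps L ux m t L * m t L = 0).

Let sig2 := sigma ^ 2 / 2.
Let P t := RInt (fun y => ux t y * m t y) 0 L.
(* the Hamiltonian: [Gfun eps L ux m t x ^ 2 = Ham t (ux t x)] *)
Let Ham t p := (/ 2 * (bcoef eps + ccoef eps * P t - p)) ^ 2.

Let Hsig2 : 0 < sig2.
Proof. unfold sig2. assert (0 < sigma ^ 2) by (apply pow_lt; auto). lra. Qed.

Lemma mfg_hjb_solution : hjb_solution T L r sig2 Ham u ut ux uxx.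
Proof.
  split; [exact Cu|split].
  - intros t x Ht Hx. apply (Hhjb t x Ht Hx).
  - intros t Ht. apply Hbc_u; lra.
Qed.

Lemma mfg_grad_bound t x : 0 <= t <= T -> 0 <= x <= L -> Rabs (ux t x) <= K + 1.
Proof.
  apply (hjb_grad_bound T L r sig2 K (K + 1) Ham u ut ux uxx); auto using mfg_hjb_solution; try lra.
  intros x' y' Hx' Hy'. rewrite (proj2 (Hdata x' Hx')), (proj2 (Hdata y' Hy')). auto.
Qed.

Let uxm_cont : rect_cont 0 T 0 L (fun t y => ux t y * m t y).
Proof. apply rect_cont_mult; try lra; [apply (proj2 Cu)|apply (proj2 Cm)]. Qed.

Let P_bounded : exists Pb, 0 <= Pb /\ forall t, 0 <= t <= T -> Rabs (P t) <= Pb.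
Proof.
  apply seg_cont_abs_bounded; [lra|].
  apply seg_cont_RInt_rect; [lra|lra|apply rect_cont_ucont, uxm_cont].
Qed.

Lemma mfg_density t : 0 <= t <= T ->
  (forall x, 0 <= x <= L -> 0 <= m t x) /\ RInt (m t) 0 L = 1.
Proof.
  intros Ht. destruct P_bounded as [Pb [HPb HP]].
  set (g := fun t x => Gfun eps L ux m t x).
  set (gx := fun t x => / 2 * (0 - uxx t x)).
  assert (Hg_cont : forall s, 0 < s < T -> seg_cont 0 L (g s) /\ seg_cont 0 L (gx s)).
  { intros s Hs. destruct Cu as [_ [_ [_ [Cux Cuxx]]]]. unfold g, gx, Gfun. split;
      (apply seg_cont_mult; [lra|apply seg_cont_const|]);
      (apply seg_cont_minus; [lra|apply seg_cont_const|apply (rect_cont_slice 0 T); auto; lra]). }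
  assert (Hg_derive : forall s x, 0 < s < T -> 0 < x < L -> is_derive (g s) x (gx s x)).
  { intros s x Hs Hx. unfold g, gx, Gfun. apply is_derive_scalR, is_derive_minusR.
    - apply is_derive_constR.
    - apply (proj1 Cu); auto. }
  assert (Hfp' : forall s x, 0 < s < T -> 0 < x < L ->
            mt s x = sig2 * mxx s x + (gx s x * m s x + g s x * mx s x)).
  { intros s x Hs Hx.
    assert (E : Derive (fun y : R => Gfun eps L ux m s y * m s y) x
                = gx s x * m s x + g s x * mx s x).
    { apply is_derive_unique, (is_derive_multR (g s) (m s)); auto. apply (proj1 Cm); auto. }
    specialize (Hfp s x Hs Hx). rewrite E in Hfp. unfold sig2. lra. }
  assert (Hg_bound : forall s x, 0 < s < T -> 0 <= x <= L ->
            Rabs (g s x) <= / 2 * (bcoef eps + ccoef eps * Pb + (K + 1))).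
  { intros s x Hs Hx. apply Rabs_drift_le; auto using bcoef_pos, ccoef_pos.
    - apply HP; lra.
    - apply mfg_grad_bound; lra. }
  split.
  - intros x Hx.
    apply (fp_nonneg T L sig2 _ m mt mx mxx g gx m0 HT HL Hsig2 Cm Hg_cont Hg_derive Hg_bound Hfp');
      auto.
    + intros s Hs. apply Hbc_m; lra.
    + intros y Hy. apply Hdata; auto.
  - rewrite <- Hmass.
    apply (fp_mass_conserved T L sig2 m mt mx mxx g gx m0 HT HL Cm Hg_cont Hg_derive Hfp'); auto.
    + intros s Hs. apply Hbc_m; lra.
    + intros y Hy. apply Hdata; auto.
Qed.

Lemma mfg_P_bound t : 0 <= t <= T -> Rabs (P t) <= K + 1.
Proof.
  intros Ht. destruct (mfg_density t Ht) as [Hpos Hone].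
  assert (Hm := rect_cont_slice 0 T 0 L m t (proj1 (proj2 Cm)) Ht).
  assert (Ex : ex_RInt (fun y => ux t y * m t y) 0 L)
    by (apply seg_cont_ex_RInt; [lra|exact (rect_cont_slice 0 T 0 L _ t uxm_cont Ht)]).
  assert (Exm : ex_RInt (m t) 0 L) by (apply seg_cont_ex_RInt; auto; lra).
  (* [P t] is an average of [ux t] against the probability density [m t] *)
  assert (Hpt : forall y, 0 < y < L -> - (K + 1) * m t y <= ux t y * m t y <= (K + 1) * m t y).
  { intros y Hy. assert (A := proj1 (Rabs_le_between _ _) (mfg_grad_bound t y Ht ltac:(lra))).
    assert (0 <= m t y) by (apply Hpos; lra). split; apply Rmult_le_compat_r; lra. }
  apply Rabs_le_between. unfold P. split.
  - replace (- (K + 1)) with (- (K + 1) * RInt (m t) 0 L) by (rewrite Hone; ring).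
    rewrite <- RInt_scalR by auto. apply RInt_le; auto; try lra.
    + apply ex_RInt_scalR; auto.
    + intros; apply Hpt; auto.
  - replace (K + 1) with ((K + 1) * RInt (m t) 0 L) by (rewrite Hone; ring).
    rewrite <- RInt_scalR by auto. apply RInt_le; auto; try lra.
    + apply ex_RInt_scalR; auto.
    + intros; apply Hpt; auto.
Qed.

Lemma mfg_u_bound t x : 0 <= t <= T -> 0 <= x <= L ->
  Rabs (u t x) <= Ub + (/ 2 * (bcoef eps + ccoef eps * (K + 1) + (K + 1))) ^ 2 * T + (K + 1) * L.
Proof.
  apply (hjb_sup_bound T L r sig2 _ Ub Ham u ut ux uxx); auto using mfg_hjb_solution; try lra.
  - intros s Hs. destruct Cu as [_ [_ [_ [Cux _]]]]. unfold Ham.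
    apply seg_cont_mult; [lra| |apply seg_cont_mult; [lra| |apply seg_cont_const]];
      (apply seg_cont_mult; [lra|apply seg_cont_const|]);
      (apply seg_cont_minus; [lra|apply seg_cont_const|apply (rect_cont_slice 0 T); auto; lra]).
  - intros s y Hs Hy. unfold Ham. split; [apply pow2_ge_0|].
    rewrite <- (pow2_abs (/ 2 * _)). apply pow_incr. split; [apply Rabs_pos|].
    apply Rabs_drift_le; auto using bcoef_pos, ccoef_pos.
    + apply mfg_P_bound; lra.
    + apply mfg_grad_bound; lra.
  - intros y Hy. rewrite (proj2 (Hdata y Hy)). auto.
  - apply (hjb_lipschitz T L r sig2 K (K + 1) Ham u ut ux uxx);
      auto using mfg_hjb_solution; try lra.
    intros x' y' Hx' Hy'. rewrite (proj2 (Hdata x' Hx')), (proj2 (Hdata y' Hy')). auto.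
Qed.

End MeanFieldGame.

Theorem lemma2p2 :
  forall (L T r eps gamma : R) (uT uT1 uT2 m0 m01 m02 : R -> R),
    0 < L -> 0 < T -> 0 < r -> 0 < eps -> 0 < gamma ->
    C2gamma L gamma uT uT1 uT2 -> C2gamma L gamma m0 m01 m02 ->
    uT1 0 = 0 -> uT1 L = 0 ->
    m0 0 = 0 -> m01 0 = 0 -> m0 L = 0 -> m01 L = 0 ->
    (forall x, 0 <= x <= L -> 0 <= m0 x) -> RInt m0 0 L = 1 ->
    (forall x, 0 <= x <= L -> 0 <= uT x) ->
    exists C, 0 < C /\
    forall (sigma : R) (u ut ux uxx m mt mx mxx : R -> R -> R),
      0 < sigma ->
      C12 T L u ut ux uxx -> C12 T L m mt mx mxx ->
      (forall t x, 0 < t < T -> 0 < x < L ->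
         ut t x + sigma ^ 2 / 2 * uxx t x - r * u t x
           + (Gfun eps L ux m t x) ^ 2 = 0) ->
      (forall t x, 0 < t < T -> 0 < x < L ->
         mt t x - sigma ^ 2 / 2 * mxx t x
           - Derive (fun y => Gfun eps L ux m t y * m t y) x = 0) ->
      (forall x, 0 <= x <= L -> m 0 x = m0 x /\ u T x = uT x) ->
      (forall t, 0 <= t <= T -> ux t 0 = 0 /\ ux t L = 0) ->
      (forall t, 0 <= t <= T ->
         sigma ^ 2 / 2 * mx t 0 + Gfun eps L ux m t 0 * m t 0 = 0 /\
         sigma ^ 2 / 2 * mx t L + Gfun eps L ux m t L * m t L = 0) ->
      (forall t x t' x', 0 <= t <= T -> 0 <= x <= L -> 0 <= t' <= T -> 0 <= x' <= L ->
         Rabs (u t x) + Rabs (ux t' x') <= C) /\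
      (forall t, 0 <= t <= T -> Rabs (RInt (fun x => ux t x * m t x) 0 L) <= C).
Proof.
  intros L T r eps gamma uT uT1 uT2 m0 m01 m02 HL HT Hr Heps _ HuT _ _ _ _ _ _ _ Hm0 Hmass _.
  destruct (C2gamma_bounds L gamma uT uT1 uT2 HL HuT) as [K [Ub [HK [HUb [HuT_bound HuT_lip]]]]].
  set (Bu := Ub + (/ 2 * (bcoef eps + ccoef eps * (K + 1) + (K + 1))) ^ 2 * T + (K + 1) * L).
  assert (HBu : 0 <= Bu).
  { unfold Bu. assert (0 <= (/ 2 * (bcoef eps + ccoef eps * (K + 1) + (K + 1))) ^ 2 * T)
      by (apply Rmult_le_pos; [apply pow2_ge_0|lra]).
    assert (0 <= (K + 1) * L) by (apply Rmult_le_pos; lra). lra. }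
  exists (Bu + (K + 1)). split; [lra|].
  intros sigma u ut ux uxx m mt mx mxx Hsigma Cu Cm Hhjb Hfp Hdata Hbc_u Hbc_m. split.
  - intros t x t' x' Ht Hx Ht' Hx'.
    assert (Hu : Rabs (u t x) <= Bu) by (eapply (mfg_u_bound L T r eps sigma); eauto).
    assert (Hux : Rabs (ux t' x') <= K + 1) by (eapply (mfg_grad_bound L T r eps sigma); eauto).
    lra.
  - intros t Ht.
    assert (HP : Rabs (RInt (fun x => ux t x * m t x) 0 L) <= K + 1)
      by (eapply (mfg_P_bound L T r eps sigma); eauto).
    lra.
Qed.
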